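(* Under the setting and hypotheses of Theorem 1 (state-feedback protocol, all roots of $s^{m-1}+a_{m-1}s^{m-2}+\cdots+a_1$ with strictly negative real part, $\mathcal{G}_{\sigma(t)}$ uniformly jointly quasi-strongly connected), assume in addition that every graph $\mathcal{G}_k$, $k\in\mathcal{S}$, is balanced, i.e. $1_N^TL_{\mathcal{G}_k}=0_N^T$. Then for every initial condition, $$\lim_{t\to\infty}x_i(t)=\Big(\frac{1}{a_1N}\sum_{j=1}^N K_2x_j(0),\,0,\dots,0\Big)^T,\qquad i=1,\dots,N.$$
   Context: Agents: $\dot x_i=Ax_i+Bu_i$, $x_i\in\mathbb{R}^m$, $m\ge2$, where $A$ has ones on the superdiagonal and zeros elsewhere and $B=(0,\dots,0,1)^T$. Protocol: $u_i=K_1x_i-\sum_{j\in\mathcal{N}_i(\sigma(t))}\alpha^{ij}_{\sigma(t)}K_2(x_i-x_j)$ with $K_1=(0,-a_1,\dots,-a_{m-1})$, $K_2=(a_1,\dots,a_{m-1},1)$. Switching digraphs $\mathcal{G}_{\sigma(t)}$ from a finite family with positive edge weights $\alpha^{ij}_k$ (edge $e_{ij}$: $i$ receives from $j$, no self-loops), piecewise constant $\sigma$ with dwell time bounded below by $\tau_D>0$. Laplacian $L_{\mathcal{G}_k}$: off-diagonal entry $(i,j)$ equals $-\alpha^{ij}_k$, diagonal entry $(i,i)$ equals $\sum_{j\in\mathcal{N}_i(k)}\alpha^{ij}_k$. Uniformly jointly quasi-strongly connected: there is $T>0$ such that for every $t\ge0$ the union of edges of $\mathcal{G}_{\sigma(s)}$,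 $s\in[t,t+T)$, forms a digraph with a node from which every other node is reachable by a directed path. *)

From Stdlib Require Import Reals Lra.
Open Scope R_scope.

Fixpoint fsum (n : nat) (f : nat -> R) : R :=
  match n with O => 0 | S n' => fsum n' f + f n' end.

(* vectors of R^m are functions nat -> R, components 0..m-1 *)
Definition dot (m : nat) (u v : nat -> R) : R := fsum m (fun l => u l * v l).

(* a : nat -> R holds the coefficients a_1, ..., a_{m-1} at indices 1..m-1 *)
Definition K1vec (a : nat -> R) (l : nat) : R :=
  if Nat.eqb l 0 then 0 else - a l.
(* K2 = (a_1, ..., a_{m-1}, 1) *)
Definition K2vec (m : nat) (a : nat -> R) (l : nat) : R :=
  if Nat.ltb (l + 1) m then a (l + 1)%nat else 1.

(* complex numbers as pairs (Re, Im) *)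
Definition C := (R * R)%type.
Definition Cadd (z w : C) : C := (fst z + fst w, snd z + snd w).
Definition Cmul (z w : C) : C :=
  (fst z * fst w - snd z * snd w, fst z * snd w + snd z * fst w).
Fixpoint Cpow (z : C) (n : nat) : C :=
  match n with O => (1, 0) | S n' => Cmul z (Cpow z n') end.
Fixpoint Csum (n : nat) (f : nat -> C) : C :=
  match n with O => (0, 0) | S n' => Cadd (Csum n' f) (f n') end.

(* p(s) = s^{m-1} + a_{m-1} s^{m-2} + ... + a_2 s + a_1 *)
Definition char_poly (m : nat) (a : nat -> R) (z : C) : C :=
  Cadd (Cpow z (m - 1)) (Csum (m - 1) (fun l => Cmul (a (l + 1)%nat, 0) (Cpow z l))).

Definition hurwitz (m : nat) (a : nat -> R) : Prop :=
  forall z : C, char_poly m a z = (0, 0) -> fst z < 0.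

(* Graph family: alpha k i j = weight of edge e_ij (i receives from j) in G_k;
   edge present iff alpha k i j > 0, absent iff alpha k i j = 0. *)
Definition valid_weights (N M : nat) (alpha : nat -> nat -> nat -> R) : Prop :=
  forall k i j, (k < M)%nat -> (i < N)%nat -> (j < N)%nat ->
    0 <= alpha k i j /\ alpha k i i = 0.

Definition laplacian (N : nat) (alpha : nat -> nat -> nat -> R) (k i j : nat) : R :=
  if Nat.eqb i j then fsum N (fun l => alpha k i l) else - alpha k i j.

Definition balanced (N : nat) (alpha : nat -> nat -> nat -> R) (k : nat) : Prop :=
  forall j, (j < N)%nat -> fsum N (fun i => laplacian N alpha k i j) = 0.

(* E v u : v receives from u, i.e. a directed edge from u to v.
   reachable E r v : there is a directed path from r to v. *)
Inductive reachable (E : nat -> nat -> Prop) (r : nat) : nat -> Prop :=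
| reach_refl : reachable E r r
| reach_step : forall u v, reachable E r u -> E v u -> reachable E r v.

Definition union_edge (N : nat) (alpha : nat -> nat -> nat -> R) (sigma : R -> nat)
  (t T : R) (v u : nat) : Prop :=
  (v < N)%nat /\ (u < N)%nat /\ exists s, t <= s < t + T /\ alpha (sigma s) v u > 0.

Definition uniformly_jointly_quasi_strongly_connected (N : nat)
  (alpha : nat -> nat -> nat -> R) (sigma : R -> nat) : Prop :=
  exists T, T > 0 /\ forall t, 0 <= t ->
    exists r, (r < N)%nat /\
      forall v, (v < N)%nat -> reachable (union_edge N alpha sigma t T) r v.

Definition switching_signal (M : nat) (sigma : R -> nat) (tauD : R) (ts : nat -> R) : Prop :=
  ts 0%nat = 0 /\
  (forall k, ts (S k) - ts k >= tauD) /\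
  (forall k t, ts k <= t < ts (S k) -> sigma t = sigma (ts k)) /\
  (forall t, 0 <= t -> (sigma t < M)%nat).

Definition input (N m : nat) (a : nat -> R) (alpha : nat -> nat -> nat -> R)
  (k : nat) (X : nat -> nat -> R) (i : nat) : R :=
  dot m (K1vec a) (X i)
  - fsum N (fun j => alpha k i j * dot m (K2vec m a) (fun l => X i l - X j l)).

(* component l of A x_i + B u_i *)
Definition rhs (N m : nat) (a : nat -> R) (alpha : nat -> nat -> nat -> R)
  (k : nat) (X : nat -> nat -> R) (i l : nat) : R :=
  if Nat.ltb (l + 1) m then X i (l + 1)%nat else input N m a alpha k X i.

(* x i t l = component l of x_i(t). Solution on [0,oo): continuous, and satisfies
   the ODE at every t > 0 that is not a switching time. *)
Definition is_solution (N m : nat) (a : nat -> R) (alpha : nat -> nat -> nat -> R)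
  (sigma : R -> nat) (ts : nat -> R) (x : nat -> R -> nat -> R) : Prop :=
  (forall i l, (i < N)%nat -> (l < m)%nat -> forall t, 0 <= t ->
     forall eps, eps > 0 -> exists delta, delta > 0 /\
       forall s, 0 <= s -> Rabs (s - t) < delta -> Rabs (x i s l - x i t l) < eps) /\
  (forall t, 0 < t -> (forall k, t <> ts k) ->
     forall i l, (i < N)%nat -> (l < m)%nat ->
       derivable_pt_lim (fun s => x i s l) t (rhs N m a alpha (sigma t) (fun j => x j t) i l)).

Definition converges_to (f : R -> R) (c : R) : Prop :=
  forall eps, eps > 0 -> exists T, forall t, t >= T -> Rabs (f t - c) < eps.

From Pilot Require Import Defs.
From Stdlib Require Import Reals Lra Lia Arith Classical ClassicalEpsilon.
From HB Require structures.
From mathcomp Require all_boot all_order all_algebra.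
From mathcomp Require Rstruct complex.

(* The proof rests on two facts.
   1. Since K2 A + K1 = 0 and K2 B = 1, the outputs y_i = K2 x_i follow the
      scalar switched consensus dynamics y_i' = sum_j alpha_ij (y_j - y_i).
      The hull [min_i y_i, max_i y_i] is invariant (maximum principle), and
      under a dwell time and uniform joint quasi-strong connectivity it shrinks
      by a fixed factor every N+1 rounds: the agents keeping a definite gap
      from one end of the hull form a front which persists and, along the
      edges of the union graphs, grows until it contains everybody.  Over
      balanced graphs sum_i y_i is conserved, so every y_i tends to the
      initial average.
   2. The states x_i^2, ..., x_i^m solve the companion system of the Hurwitz
      polynomial s^{m-1} + a_{m-1} s^{m-2} + ... + a_1, driven by a coupling
      term that vanishes by 1.  Factoring out one root at a time (fundamental
      theorem of algebra) turns it into a cascade of stable first-order modes,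
      so these states vanish and x_i^1 = (y_i - ...) / a_1 tends to
      (average) / a_1. *)

(* The fundamental theorem of algebra, transported from the complex numbers
   [R[i]] of mathcomp-real-closed to the pair encoding [Defs.C]. *)
Module FundamentalTheorem.
Import HB.structures all_boot all_order all_algebra Rstruct complex GRing.Theory.
Local Open Scope ring_scope.

Definition to_pair (z : (Rdefinitions.R)[i]) : Defs.C := (Re z, Im z).

Lemma to_pairD z w : to_pair (z + w) = Cadd (to_pair z) (to_pair w).
Proof. by case: z => ? ?; case: w. Qed.

Lemma to_pairM z w : to_pair (z * w) = Cmul (to_pair z) (to_pair w).
Proof. by case: z => ? ?; case: w. Qed.

Lemma to_pairX z n : to_pair (z ^+ n) = Cpow (to_pair z) n.
Proof. by elim: n => [|n IH] //; rewrite exprS to_pairM IH. Qed.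

Lemma to_pair_sum n (F : nat -> (Rdefinitions.R)[i]) :
  to_pair (\sum_(k < n) F k) = Csum n (fun k => to_pair (F k)).
Proof.
elim: n => [|n IH]; first by rewrite big_ord0.
by rewrite big_ord_recr /= to_pairD IH.
Qed.

Lemma fta (n : nat) (c : nat -> Defs.C) : (0 < n)%coq_nat ->
  exists z, Cpow z n = Csum n (fun k => Cmul (c k) (Cpow z k)).
Proof.
move=> /ltP n_gt0.
pose c' k := Complex (fst (c k)) (snd (c k)).
have [z Hz] := @complex_acf_axiom Rdefinitions.R n c' n_gt0.
exists (to_pair z); rewrite -to_pairX Hz (to_pair_sum n (fun k => c' k * z ^+ k)).
have E k : to_pair (c' k * z ^+ k) = Cmul (c k) (Cpow (to_pair z) k).
  by rewrite to_pairM to_pairX /c'; case: (c k).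
by elim: (n) => //= k ->; rewrite E.
Qed.
End FundamentalTheorem.

Open Scope R_scope.
Set Bullet Behavior "Strict Subproofs".

Definition Czero : Defs.C := (0, 0).
Definition Cone : Defs.C := (1, 0).
Definition Copp (z : Defs.C) : Defs.C := (- fst z, - snd z).
Definition Csub (z w : Defs.C) : Defs.C := Cadd z (Copp w).

Lemma C_ring_theory : ring_theory Czero Cone Cadd Cmul Csub Copp (@eq Defs.C).
Proof.
  constructor; intros;
    repeat match goal with z : Defs.C |- _ => destruct z end;
    unfold Csub, Czero, Cone, Cadd, Cmul, Copp; simpl; f_equal; ring.
Qed.
Add Ring C_ring : C_ring_theory.

Lemma Csum_ext n f g : (forall k, (k < n)%nat -> f k = g k) -> Csum n f = Csum n g.
Proof.
  induction n; simpl; intros H; auto.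
  rewrite IHn by (intros; apply H; lia). rewrite H by lia. reflexivity.
Qed.

Lemma Csum_zero n : Csum n (fun _ => Czero) = Czero.
Proof. induction n; simpl; [reflexivity|]. rewrite IHn. ring. Qed.

Lemma Csum_add n f g : Csum n (fun k => Cadd (f k) (g k)) = Cadd (Csum n f) (Csum n g).
Proof. induction n; simpl; [change (0, 0) with Czero; ring|]. rewrite IHn. ring. Qed.

Lemma Csum_scal n c f : Csum n (fun k => Cmul c (f k)) = Cmul c (Csum n f).
Proof. induction n; simpl; [change (0, 0) with Czero; ring|]. rewrite IHn. ring. Qed.

Lemma Csum_shift n f : Csum (S n) f = Cadd (f O) (Csum n (fun k => f (S k))).
Proof. induction n; simpl in *; [change (0, 0) with Czero; ring|]. rewrite IHn. ring. Qed.

Lemma fst_Csum n f : fst (Csum n f) = fsum n (fun k => fst (f k)).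
Proof. induction n; simpl; auto. rewrite IHn; auto. Qed.

Lemma snd_Csum n f : snd (Csum n f) = fsum n (fun k => snd (f k)).
Proof. induction n; simpl; auto. rewrite IHn; auto. Qed.

Definition monic_poly (n : nat) (c : nat -> Defs.C) (z : Defs.C) : Defs.C :=
  Cadd (Cpow z n) (Csum n (fun k => Cmul (c k) (Cpow z k))).

(* Division by (X - lam) in summation form: if d_n = 1 and
   d_j = c_{j+1} + lam d_{j+1}, then for every sequence w
     sum_{k<=n} c_k w_k + lam w_n
       = sum_{k<n} d_k (w_{k+1} - lam w_k) + (c_0 + lam d_0) w_0.
   With w_k = z^k this factors the polynomial; with w_k the states of a
   companion system it transforms the system (see [companion_reduce]). *)
Lemma division_identity n (c d w : nat -> Defs.C) lam :
  (forall j, (j < n)%nat -> d j = Cadd (c (S j)) (Cmul lam (d (S j)))) -> d n = Cone ->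
  Cadd (Csum (S n) (fun k => Cmul (c k) (w k))) (Cmul lam (w n)) =
  Cadd (Csum n (fun k => Cmul (d k) (Csub (w (S k)) (Cmul lam (w k)))))
       (Cmul (Cadd (c O) (Cmul lam (d O))) (w O)).
Proof.
  revert c d w. induction n; intros c d w Hd Hn.
  - simpl. rewrite Hn. change (0, 0) with Czero. ring.
  - assert (Hd0 : d O = Cadd (c 1%nat) (Cmul lam (d 1%nat))) by (apply Hd; lia).
    assert (IH := IHn (fun k => c (S k)) (fun k => d (S k)) (fun k => w (S k))
                      ltac:(intros; apply Hd; lia) Hn).
    cbv beta in IH. rewrite <- Hd0 in IH.
    rewrite (Csum_shift (S n) (fun k => Cmul (c k) (w k))),
            (Csum_shift n (fun k => Cmul (d k) (Csub (w (S k)) (Cmul lam (w k))))).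
    set (A := Csum (S n) (fun k => Cmul (c (S k)) (w (S k)))) in *.
    set (B := Csum n (fun k => Cmul (d (S k)) (Csub (w (S (S k))) (Cmul lam (w (S k)))))) in *.
    replace A with (Csub (Cadd B (Cmul (d O) (w 1%nat))) (Cmul lam (w (S n))))
      by (rewrite <- IH; ring).
    ring.
Qed.

(* Quotient coefficients of the division of a degree-(n+1) monic polynomial by
   (X - lam), computed from the top: [quot_coef c lam n j = d_j]. *)
Fixpoint quot_from_top (c : nat -> Defs.C) (lam : Defs.C) (n k : nat) : Defs.C :=
  match k with
  | O => Cone
  | S k' => Cadd (c (n - k')%nat) (Cmul lam (quot_from_top c lam n k'))
  end.
Definition quot_coef (c : nat -> Defs.C) (lam : Defs.C) (n j : nat) : Defs.C := quot_from_top c lam n (n - j).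

Lemma quot_coef_rec c lam n j : (j < n)%nat ->
  quot_coef c lam n j = Cadd (c (S j)) (Cmul lam (quot_coef c lam n (S j))).
Proof.
  intros H. unfold quot_coef. replace (n - j)%nat with (S (n - S j)) by lia. simpl.
  replace (n - (n - S j))%nat with (S j) by lia. reflexivity.
Qed.

Lemma quot_coef_top c lam n : quot_coef c lam n n = Cone.
Proof. unfold quot_coef. rewrite Nat.sub_diag. reflexivity. Qed.

Lemma monic_poly_factor n c lam z :
  monic_poly (S n) c z =
  Cadd (Cmul (Csub z lam) (monic_poly n (quot_coef c lam n) z))
       (Cadd (c O) (Cmul lam (quot_coef c lam n O))).
Proof.
  unfold monic_poly.
  pose proof (division_identity n c (quot_coef c lam n) (fun k => Cpow z k) lam
                (quot_coef_rec c lam n) (quot_coef_top c lam n)) as E.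
  cbv beta in E.
  rewrite (Csum_ext n _ (fun k => Cmul (Csub z lam) (Cmul (quot_coef c lam n k) (Cpow z k))))
    in E by (intros; simpl; ring).
  rewrite Csum_scal in E.
  set (S1 := Csum (S n) (fun k => Cmul (c k) (Cpow z k))) in *.
  set (S2 := Csum n (fun k => Cmul (quot_coef c lam n k) (Cpow z k))) in *.
  replace S1 with (Csub (Cadd (Cmul (Csub z lam) S2)
                     (Cmul (Cadd (c O) (Cmul lam (quot_coef c lam n O))) (Cpow z 0)))
                     (Cmul lam (Cpow z n))) by (rewrite <- E; ring).
  simpl Cpow. change (1, 0) with Cone. ring.
Qed.

Lemma monic_poly_root n (c : nat -> Defs.C) : exists z, monic_poly (S n) c z = Czero.
Proof.
  destruct (FundamentalTheorem.fta (S n) (fun k => Copp (c k))) as [z Hz]; [lia|].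
  exists z. unfold monic_poly. rewrite Hz, <- Csum_add, <- (Csum_zero (S n)).
  apply Csum_ext. intros. ring.
Qed.

Lemma fsum_ext n f g : (forall i, (i < n)%nat -> f i = g i) -> fsum n f = fsum n g.
Proof.
  induction n; simpl; intros H; auto.
  rewrite IHn by (intros; apply H; lia). rewrite H by lia. reflexivity.
Qed.

Lemma fsum_plus n f g : fsum n (fun i => f i + g i) = fsum n f + fsum n g.
Proof. induction n; simpl; [ring|]. rewrite IHn. ring. Qed.

Lemma fsum_scal n c f : fsum n (fun i => c * f i) = c * fsum n f.
Proof. induction n; simpl; [ring|]. rewrite IHn. ring. Qed.

Lemma fsum_opp n f : fsum n (fun i => - f i) = - fsum n f.
Proof. induction n; simpl; [ring|]. rewrite IHn. ring. Qed.

Lemma fsum_minus n f g : fsum n (fun i => f i - g i) = fsum n f - fsum n g.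
Proof. induction n; simpl; [ring|]. rewrite IHn. ring. Qed.

Lemma fsum_const n c : fsum n (fun _ => c) = INR n * c.
Proof. induction n; [simpl; ring|]. rewrite S_INR. simpl. rewrite IHn. ring. Qed.

Lemma fsum_shift n f : fsum (S n) f = f O + fsum n (fun i => f (S i)).
Proof. induction n; simpl in *; [ring|]. rewrite IHn. ring. Qed.

Lemma fsum_swap n p (f : nat -> nat -> R) :
  fsum n (fun i => fsum p (fun j => f i j)) = fsum p (fun j => fsum n (fun i => f i j)).
Proof.
  induction n; simpl.
  - rewrite fsum_const, Rmult_0_r. rewrite <- (Rmult_0_r (INR p)), <- fsum_const.
    apply fsum_ext. reflexivity.
  - rewrite IHn, <- fsum_plus. reflexivity.
Qed.

Lemma fsum_delta n i (c : nat -> R) : (i < n)%nat ->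
  fsum n (fun j => if Nat.eqb i j then c j else 0) = c i.
Proof.
  induction n; simpl; intros H; [lia|].
  destruct (Nat.eq_dec i n).
  - subst. rewrite Nat.eqb_refl, (fsum_ext n _ (fun _ => 0)), fsum_const; [ring|].
    intros j Hj. destruct (Nat.eqb_spec n j); [lia|reflexivity].
  - rewrite IHn by lia. destruct (Nat.eqb_spec i n); [lia|ring].
Qed.

Lemma fsum_le n f g : (forall i, (i < n)%nat -> f i <= g i) -> fsum n f <= fsum n g.
Proof.
  induction n; simpl; intros H; [lra|].
  assert (f n <= g n) by (apply H; lia).
  assert (fsum n f <= fsum n g) by (apply IHn; intros; apply H; lia). lra.
Qed.

Lemma fsum_bound n f c : (forall i, (i < n)%nat -> f i <= c) -> fsum n f <= INR n * c.
Proof. intros H. rewrite <- fsum_const. apply fsum_le. exact H. Qed.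

Lemma fsum_nonneg n f : (forall i, (i < n)%nat -> 0 <= f i) -> 0 <= fsum n f.
Proof. intros H. rewrite <- (Rmult_0_r (INR n)), <- fsum_const. apply fsum_le. exact H. Qed.

Lemma fsum_ge_term n f j : (forall i, (i < n)%nat -> 0 <= f i) -> (j < n)%nat -> f j <= fsum n f.
Proof.
  induction n; simpl; intros H Hj; [lia|].
  assert (0 <= fsum n f) by (apply fsum_nonneg; intros; apply H; lia).
  destruct (Nat.eq_dec j n) as [->|Hne]; [lra|].
  assert (0 <= f n) by (apply H; lia).
  assert (f j <= fsum n f) by (apply IHn; [intros; apply H; lia | lia]). lra.
Qed.

Lemma fsum_abs n f : Rabs (fsum n f) <= fsum n (fun i => Rabs (f i)).
Proof.
  induction n; simpl; [rewrite Rabs_R0; lra|].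
  eapply Rle_trans; [apply Rabs_triang | lra].
Qed.

Lemma fin_bounds n (f : nat -> R) :
  exists b B, b <= B /\ forall i, (i < n)%nat -> b <= f i /\ f i <= B.
Proof.
  induction n as [|n [b [B [HbB Hb]]]]; [exists 0, 0; split; [lra | intros; lia]|].
  exists (Rmin b (f n)), (Rmax B (f n)).
  pose proof (Rmin_l b (f n)); pose proof (Rmax_l B (f n)).
  split; [lra|]. intros i Hi. destruct (Nat.eq_dec i n) as [->|Hne].
  - split; [apply Rmin_r | apply Rmax_r].
  - destruct (Hb i ltac:(lia)). lra.
Qed.

Lemma dpl_fsum n (F : nat -> R -> R) (d : nat -> R) t :
  (forall i, (i < n)%nat -> derivable_pt_lim (F i) t (d i)) ->
  derivable_pt_lim (fun s => fsum n (fun i => F i s)) t (fsum n d).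
Proof.
  induction n; simpl; intros H.
  - apply derivable_pt_lim_const.
  - apply (derivable_pt_lim_plus (fun s => fsum n (fun i => F i s)) (F n));
      [apply IHn; intros | ]; apply H; lia.
Qed.

Lemma dpl_eqv f t d d' : derivable_pt_lim f t d -> d = d' -> derivable_pt_lim f t d'.
Proof. intros H E; subst; exact H. Qed.

Lemma dpl_exp_lin c t : derivable_pt_lim (fun s => exp (c * s)) t (c * exp (c * t)).
Proof.
  replace (c * exp (c * t)) with (exp (c * t) * (c * 1)) by ring.
  apply (derivable_pt_lim_comp (fun s => c * s) exp).
  - apply derivable_pt_lim_scal, derivable_pt_lim_id.
  - apply derivable_pt_lim_exp.
Qed.

Definition cont_nonneg (f : R -> R) (t : R) : Prop :=
  forall eps, eps > 0 -> exists delta, delta > 0 /\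
    forall s, 0 <= s -> Rabs (s - t) < delta -> Rabs (f s - f t) < eps.

Lemma cont_nonneg_of_cont f t : continuity_pt f t -> cont_nonneg f t.
Proof.
  intros H eps He. destruct (H eps He) as [d [Hd H']]. exists d; split; auto.
  intros s _ Hs. destruct (Req_dec s t) as [->|Hne].
  - unfold Rminus; rewrite Rplus_opp_r, Rabs_R0; lra.
  - apply (H' s). split; [split; [exact I | auto] | exact Hs].
Qed.

(* Relative continuity on [0,+oo) is ordinary continuity of the extension of f
   that is constant on (-oo, 0]; this transfers the algebra of continuous
   functions. *)
Lemma cont_nonneg_iff f t : 0 <= t ->
  (cont_nonneg f t <-> continuity_pt (fun s => f (Rmax s 0)) t).
Proof.
  intros Ht; split.
  - intros H eps He. destruct (H eps He) as [d [Hd H']]. exists d; split; auto.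
    intros s [_ Hs]. simpl in *. unfold R_dist in *. rewrite (Rmax_left t 0) by lra.
    apply H'; [apply Rmax_r|].
    unfold Rmax; destruct (Rle_dec s 0); [|exact Hs].
    apply Rabs_def2 in Hs. apply Rabs_def1; lra.
  - intros H. apply cont_nonneg_of_cont in H. intros eps He.
    destruct (H eps He) as [d [Hd H']]. exists d; split; auto.
    intros s Hs Hst. specialize (H' s Hs Hst).
    rewrite (Rmax_left s 0), (Rmax_left t 0) in H' by lra. exact H'.
Qed.

Lemma cont_nonneg_of_dpl f t d : derivable_pt_lim f t d -> cont_nonneg f t.
Proof. intros H. apply cont_nonneg_of_cont, derivable_continuous_pt. exists d; exact H. Qed.

Lemma cont_nonneg_ext f g t : (forall s, f s = g s) -> cont_nonneg f t -> cont_nonneg g t.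
Proof.
  intros E H eps He. destruct (H eps He) as [d [Hd H']]. exists d; split; auto.
  intros. rewrite <- !E; auto.
Qed.

Lemma cont_nonneg_const c t : cont_nonneg (fun _ => c) t.
Proof. apply cont_nonneg_of_cont, continuity_pt_const. intros ? ?; reflexivity. Qed.

Lemma cont_nonneg_plus f g t : 0 <= t -> cont_nonneg f t -> cont_nonneg g t ->
  cont_nonneg (fun s => f s + g s) t.
Proof.
  intros Ht Hf Hg. apply cont_nonneg_iff in Hf, Hg; auto. apply cont_nonneg_iff; auto.
  apply (continuity_pt_plus (fun s => f (Rmax s 0)) (fun s => g (Rmax s 0))); auto.
Qed.

Lemma cont_nonneg_mult f g t : 0 <= t -> cont_nonneg f t -> cont_nonneg g t ->
  cont_nonneg (fun s => f s * g s) t.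
Proof.
  intros Ht Hf Hg. apply cont_nonneg_iff in Hf, Hg; auto. apply cont_nonneg_iff; auto.
  apply (continuity_pt_mult (fun s => f (Rmax s 0)) (fun s => g (Rmax s 0))); auto.
Qed.

Lemma cont_nonneg_scal c f t : 0 <= t -> cont_nonneg f t -> cont_nonneg (fun s => c * f s) t.
Proof. intros. apply (cont_nonneg_mult (fun _ => c) f); auto using cont_nonneg_const. Qed.

Lemma cont_nonneg_minus f g t : 0 <= t -> cont_nonneg f t -> cont_nonneg g t ->
  cont_nonneg (fun s => f s - g s) t.
Proof.
  intros Ht Hf Hg. apply (cont_nonneg_ext (fun s => f s + (-1) * g s)); [intros; ring|].
  apply cont_nonneg_plus, cont_nonneg_scal; auto.
Qed.

Lemma cont_nonneg_fsum n (F : nat -> R -> R) t : 0 <= t ->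
  (forall i, (i < n)%nat -> cont_nonneg (F i) t) ->
  cont_nonneg (fun s => fsum n (fun i => F i s)) t.
Proof.
  intros Ht. induction n; simpl; intros H; [apply cont_nonneg_const|].
  apply (cont_nonneg_plus (fun s => fsum n (fun i => F i s)) (F n)); auto.
Qed.

Lemma cont_nonneg_exp c t : cont_nonneg (fun s => exp (c * s)) t.
Proof. apply (cont_nonneg_of_dpl _ _ _ (dpl_exp_lin c t)). Qed.

Lemma le_of_le_plus_eps x y : (forall e, e > 0 -> x <= y + e) -> x <= y.
Proof. intros H. destruct (Rle_dec x y); auto. specialize (H ((x - y) / 2)). lra. Qed.

(* Mean value inequality: f' <= K on (a, b) and f continuous at a and b
   (relative to [0, +oo)) give f b - f a <= K (b - a).  Apply the classical
   mean value theorem on [a + r, b - r] and let r -> 0. *)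
Lemma mvt_upper f df K a b : 0 <= a -> a <= b ->
  (forall t, a < t < b -> derivable_pt_lim f t (df t) /\ df t <= K) ->
  cont_nonneg f a -> cont_nonneg f b -> f b - f a <= K * (b - a).
Proof.
  intros Ha Hab Hd Ca Cb. destruct (Req_dec a b) as [<-|Hne]; [lra|].
  apply le_of_le_plus_eps. intros e He.
  destruct (Ca (e / 6)) as [da [Hda Ha']]; [lra|].
  destruct (Cb (e / 6)) as [db [Hdb Hb']]; [lra|].
  set (L := Rabs K + 1).
  assert (HL : 0 < L) by (unfold L; pose proof (Rabs_pos K); lra).
  set (r := Rmin (Rmin da db) (Rmin ((b - a) / 3) (e / (3 * L))) / 2).
  assert (Hr : 0 < r /\ r < da /\ r < db /\ r < (b - a) / 3 /\ r * (3 * L) <= e).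
  { assert (0 < e / (3 * L)) by (apply Rdiv_lt_0_compat; lra).
    pose proof (Rmin_l (Rmin da db) (Rmin ((b - a) / 3) (e / (3 * L)))).
    pose proof (Rmin_r (Rmin da db) (Rmin ((b - a) / 3) (e / (3 * L)))).
    pose proof (Rmin_l da db); pose proof (Rmin_r da db).
    pose proof (Rmin_l ((b - a) / 3) (e / (3 * L))); pose proof (Rmin_r ((b - a) / 3) (e / (3 * L))).
    assert (0 < Rmin (Rmin da db) (Rmin ((b - a) / 3) (e / (3 * L))))
      by (repeat apply Rmin_pos; lra).
    assert (r <= e / (3 * L)) by (unfold r; lra).
    assert (e / (3 * L) * (3 * L) = e) by (field; lra).
    unfold r in *; repeat split; try lra. nra. }
  destruct Hr as [Hr0 [Hra [Hrb [Hrab Hre]]]].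
  destruct (MVT_cor2 f df (a + r) (b - r)) as [c [Hc1 Hc2]]; [lra | intros; apply Hd; lra |].
  assert (Hdc : df c <= K) by (apply Hd; lra).
  assert (A1 : Rabs (f (a + r) - f a) < e / 6) by (apply Ha'; [lra | rewrite Rabs_right; lra]).
  assert (A2 : Rabs (f (b - r) - f b) < e / 6) by (apply Hb'; [lra | rewrite Rabs_left; lra]).
  apply Rabs_def2 in A1. apply Rabs_def2 in A2.
  assert (df c * (b - r - (a + r)) <= K * (b - r - (a + r))) by (apply Rmult_le_compat_r; lra).
  assert (- K <= L) by (unfold L; pose proof (Rle_abs (- K)); rewrite Rabs_Ropp in *; lra).
  assert (- K * (2 * r) <= L * (2 * r)) by (apply Rmult_le_compat_r; lra).
  lra.
Qed.

(* Solutions are differentiable only away from these instants, so every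
   estimate is obtained from a mean value inequality valid across them. *)
Section SwitchingTimes.
Variable ts : nat -> R.
Variable tauD : R.
Hypothesis HtauD : 0 < tauD.
Hypothesis Hts0 : ts 0%nat = 0.
Hypothesis Hdwell : forall k, ts (S k) - ts k >= tauD.

Lemma ts_mono j k : (j <= k)%nat -> ts j <= ts k.
Proof. induction 1; [lra|]. pose proof (Hdwell m). lra. Qed.

Lemma ts_lower k : ts k >= INR k * tauD.
Proof. induction k; [simpl; lra|]. rewrite S_INR. pose proof (Hdwell k). lra. Qed.

Lemma ts_unbounded r : exists k, r <= ts k.
Proof.
  destruct (INR_unbounded (r / tauD)) as [k Hk]. exists k.
  pose proof (ts_lower k).
  assert (r = r / tauD * tauD) by (field; lra).
  assert (r / tauD * tauD <= INR k * tauD) by (apply Rmult_le_compat_r; lra). lra.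
Qed.

Lemma ts_interval s : 0 <= s -> exists k, ts k <= s < ts (S k).
Proof.
  intros Hs. destruct (ts_unbounded (s + 1)) as [n Hn].
  assert (Hlt : s < ts n) by lra. clear Hn. induction n; [rewrite Hts0 in Hlt; lra|].
  destruct (Rlt_dec s (ts n)); auto. exists n. lra.
Qed.

Lemma ts_noswitch k t : ts k < t < ts (S k) -> forall j, t <> ts j.
Proof.
  intros [H1 H2] j ->. destruct (Nat.le_gt_cases j k) as [Hjk|Hjk].
  - pose proof (ts_mono j k Hjk). lra.
  - pose proof (ts_mono (S k) j Hjk). lra.
Qed.

(* Mean value inequality for functions differentiable except at switching
   instants: split [a, b] at the instants it contains. *)
Lemma pw_mvt_upper f df K a b : 0 <= a -> a <= b ->
  (forall t, a < t < b -> (forall k, t <> ts k) -> derivable_pt_lim f t (df t) /\ df t <= K) ->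
  (forall t, a <= t <= b -> cont_nonneg f t) -> f b - f a <= K * (b - a).
Proof.
  intros Ha Hab Hd Hc. destruct (ts_unbounded b) as [n Hn].
  revert a b Ha Hab Hd Hc Hn. induction n; intros a b Ha Hab Hd Hc Hn.
  - rewrite Hts0 in Hn. replace b with a by lra. lra.
  - destruct (Rle_dec b (ts n)); [apply IHn; auto|].
    assert (Hlast : forall a', a <= a' -> ts n <= a' -> a' <= b -> f b - f a' <= K * (b - a')).
    { intros a' H1 H2 H3. apply (mvt_upper f df); try lra; [| apply Hc; lra | apply Hc; lra].
      intros t Ht. apply Hd; [lra|]. apply (ts_noswitch n). lra. }
    destruct (Rle_dec (ts n) a); [apply Hlast; lra|].
    assert (f (ts n) - f a <= K * (ts n - a)).
    { apply IHn; try lra; [intros; apply Hd; auto; lra | intros; apply Hc; lra]. }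
    assert (f b - f (ts n) <= K * (b - ts n)) by (apply Hlast; lra).
    lra.
Qed.

Lemma pw_mvt_lower f df K a b : 0 <= a -> a <= b ->
  (forall t, a < t < b -> (forall k, t <> ts k) -> derivable_pt_lim f t (df t) /\ K <= df t) ->
  (forall t, a <= t <= b -> cont_nonneg f t) -> K * (b - a) <= f b - f a.
Proof.
  intros Ha Hab Hd Hc.
  assert (H : - f b - - f a <= (- K) * (b - a)).
  { apply (pw_mvt_upper (fun s => - f s) (fun s => - df s)); auto.
    - intros t Ht Hn. destruct (Hd t Ht Hn). split; [apply derivable_pt_lim_opp; auto | lra].
    - intros t Ht. apply (cont_nonneg_ext (fun s => (-1) * f s)); [intros; ring|].
      apply cont_nonneg_scal; [lra | auto]. }
  lra.
Qed.

Lemma pw_constant f : (forall t, 0 < t -> (forall k, t <> ts k) -> derivable_pt_lim f t 0) ->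
  (forall t, 0 <= t -> cont_nonneg f t) -> forall t, 0 <= t -> f t = f 0.
Proof.
  intros Hd Hc t Ht.
  assert (Hc' : forall s, 0 <= s <= t -> cont_nonneg f s) by (intros; apply Hc; lra).
  assert (f t - f 0 <= 0 * (t - 0)).
  { apply (pw_mvt_upper f (fun _ => 0)); auto; try lra.
    intros s Hs Hn. split; [apply Hd; [lra | exact Hn] | lra]. }
  assert (0 * (t - 0) <= f t - f 0).
  { apply (pw_mvt_lower f (fun _ => 0)); auto; try lra.
    intros s Hs Hn. split; [apply Hd; [lra | exact Hn] | lra]. }
  lra.
Qed.

Lemma pw_gronwall_upper W dW c t0 t : 0 <= t0 -> t0 <= t ->
  (forall s, t0 < s < t -> (forall k, s <> ts k) -> derivable_pt_lim W s (dW s) /\ dW s <= c * W s) ->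
  (forall s, t0 <= s <= t -> cont_nonneg W s) ->
  W t <= exp (c * (t - t0)) * W t0.
Proof.
  intros Ht0 Ht Hd Hc.
  set (F := fun s => exp (- c * s) * W s).
  assert (HF : F t - F t0 <= 0 * (t - t0)).
  { apply (pw_mvt_upper F (fun s => - c * exp (- c * s) * W s + exp (- c * s) * dW s)); auto.
    - intros s Hs Hn. destruct (Hd s Hs Hn) as [Ds Hs'].
      split; [apply (derivable_pt_lim_mult (fun s => exp (- c * s)) W); auto using dpl_exp_lin|].
      assert (exp (- c * s) * (dW s - c * W s) <= exp (- c * s) * 0)
        by (apply Rmult_le_compat_l; [left; apply exp_pos | lra]).
      lra.
    - intros s Hs. apply cont_nonneg_mult; [lra | apply cont_nonneg_exp | apply Hc; lra]. }
  unfold F in HF.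
  assert (E : forall s, exp (c * s) * exp (- c * s) = 1)
    by (intros s; rewrite <- exp_plus; replace (c * s + - c * s) with 0 by ring; apply exp_0).
  assert (Et : W t = exp (c * t) * (exp (- c * t) * W t)) by (rewrite <- Rmult_assoc, E; ring).
  assert (Ec : exp (c * (t - t0)) = exp (c * t) * exp (- c * t0))
    by (rewrite <- exp_plus; f_equal; ring).
  rewrite Et, Ec, Rmult_assoc.
  apply Rmult_le_compat_l; [left; apply exp_pos | lra].
Qed.

Lemma pw_gronwall_lower W dW c t0 t : 0 <= t0 -> t0 <= t ->
  (forall s, t0 < s < t -> (forall k, s <> ts k) -> derivable_pt_lim W s (dW s) /\ c * W s <= dW s) ->
  (forall s, t0 <= s <= t -> cont_nonneg W s) ->
  exp (c * (t - t0)) * W t0 <= W t.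
Proof.
  intros Ht0 Ht Hd Hc.
  assert (H : - W t <= exp (c * (t - t0)) * - W t0).
  { apply (pw_gronwall_upper (fun s => - W s) (fun s => - dW s)); auto.
    - intros s Hs Hn. destruct (Hd s Hs Hn). split; [apply derivable_pt_lim_opp; auto | lra].
    - intros s Hs. apply (cont_nonneg_ext (fun s => (-1) * W s)); [intros; ring|].
      apply cont_nonneg_scal; [lra | auto]. }
  lra.
Qed.

End SwitchingTimes.

Definition cdpl (F : R -> Defs.C) (t : R) (d : Defs.C) : Prop :=
  derivable_pt_lim (fun s => fst (F s)) t (fst d) /\
  derivable_pt_lim (fun s => snd (F s)) t (snd d).
Definition ccont (F : R -> Defs.C) (t : R) : Prop :=
  cont_nonneg (fun s => fst (F s)) t /\ cont_nonneg (fun s => snd (F s)) t.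
Definition cvanish (F : R -> Defs.C) : Prop :=
  forall eps, eps > 0 -> exists T, forall t, t >= T ->
    Rabs (fst (F t)) < eps /\ Rabs (snd (F t)) < eps.

Lemma cdpl_cmul k F t d : cdpl F t d -> cdpl (fun s => Cmul k (F s)) t (Cmul k d).
Proof.
  intros [H1 H2]. split; simpl.
  - apply (derivable_pt_lim_minus (fun s => fst k * fst (F s)) (fun s => snd k * snd (F s)));
      apply derivable_pt_lim_scal; auto.
  - apply (derivable_pt_lim_plus (fun s => fst k * snd (F s)) (fun s => snd k * fst (F s)));
      apply derivable_pt_lim_scal; auto.
Qed.

Lemma cdpl_sub F G t a b : cdpl F t a -> cdpl G t b -> cdpl (fun s => Csub (F s) (G s)) t (Csub a b).
Proof.
  intros [H1 H2] [H3 H4]. split; simpl.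
  - apply (derivable_pt_lim_plus (fun s => fst (F s)) (fun s => - fst (G s))); auto.
    apply (derivable_pt_lim_opp (fun s => fst (G s))); auto.
  - apply (derivable_pt_lim_plus (fun s => snd (F s)) (fun s => - snd (G s))); auto.
    apply (derivable_pt_lim_opp (fun s => snd (G s))); auto.
Qed.

Lemma cdpl_eqv F t d d' : cdpl F t d -> d = d' -> cdpl F t d'.
Proof. intros H E; subst; exact H. Qed.

Lemma ccont_sub F G t : 0 <= t -> ccont F t -> ccont G t -> ccont (fun s => Csub (F s) (G s)) t.
Proof.
  intros Ht [H1 H2] [H3 H4]. split; simpl.
  - apply (cont_nonneg_ext (fun s => fst (F s) + (-1) * fst (G s))); [intros; ring|].
    apply cont_nonneg_plus, cont_nonneg_scal; auto.
  - apply (cont_nonneg_ext (fun s => snd (F s) + (-1) * snd (G s))); [intros; ring|].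
    apply cont_nonneg_plus, cont_nonneg_scal; auto.
Qed.

Lemma ccont_cmul k F t : 0 <= t -> ccont F t -> ccont (fun s => Cmul k (F s)) t.
Proof.
  intros Ht [H1 H2]. split; simpl.
  - apply (cont_nonneg_ext (fun s => fst k * fst (F s) + (- snd k) * snd (F s))); [intros; ring|].
    apply cont_nonneg_plus; auto; apply cont_nonneg_scal; auto.
  - apply cont_nonneg_plus; auto; apply cont_nonneg_scal; auto.
Qed.

Lemma lin_comb_small a b x y eps : eps > 0 ->
  Rabs x < eps / (Rabs a + Rabs b + 1) -> Rabs y < eps / (Rabs a + Rabs b + 1) ->
  Rabs (a * x + b * y) < eps.
Proof.
  intros He Hx Hy. set (K := Rabs a + Rabs b + 1) in *.
  assert (HK : 0 < K) by (unfold K; pose proof (Rabs_pos a); pose proof (Rabs_pos b); lra).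
  assert (eps / K * K = eps) by (field; lra).
  eapply Rle_lt_trans; [apply Rabs_triang|]. rewrite !Rabs_mult.
  assert (Rabs a * Rabs x <= Rabs a * (eps / K)) by (apply Rmult_le_compat_l; [apply Rabs_pos | lra]).
  assert (Rabs b * Rabs y <= Rabs b * (eps / K)) by (apply Rmult_le_compat_l; [apply Rabs_pos | lra]).
  assert (0 < eps / K) by (apply Rdiv_lt_0_compat; lra).
  unfold K in *. nra.
Qed.

Lemma cvanish_lin k1 F k2 G : cvanish F -> cvanish G ->
  cvanish (fun s => Cadd (Cmul k1 (F s)) (Cmul k2 (G s))).
Proof.
  intros HF HG eps He.
  set (K := fun z : Defs.C => Rabs (fst z) + Rabs (snd z) + 1).
  assert (HK : forall z, 0 < K z)
    by (intros z; unfold K; pose proof (Rabs_pos (fst z)); pose proof (Rabs_pos (snd z)); lra).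
  destruct (HF (eps / 2 / K k1)) as [T1 H1]; [apply Rdiv_lt_0_compat; auto; lra|].
  destruct (HG (eps / 2 / K k2)) as [T2 H2]; [apply Rdiv_lt_0_compat; auto; lra|].
  exists (Rmax T1 T2). intros t Ht.
  destruct (H1 t ltac:(pose proof (Rmax_l T1 T2); lra)) as [A1 A2].
  destruct (H2 t ltac:(pose proof (Rmax_r T1 T2); lra)) as [B1 B2].
  assert (Rabs (fst k1 * fst (F t) - snd k1 * snd (F t)) < eps / 2).
  { replace (fst k1 * fst (F t) - snd k1 * snd (F t))
      with (fst k1 * fst (F t) + (- snd k1) * snd (F t)) by ring.
    apply lin_comb_small; [lra | |]; rewrite Rabs_Ropp; assumption. }
  assert (Rabs (fst k1 * snd (F t) + snd k1 * fst (F t)) < eps / 2)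
    by (apply lin_comb_small; [lra | exact A2 | exact A1]).
  assert (Rabs (fst k2 * fst (G t) - snd k2 * snd (G t)) < eps / 2).
  { replace (fst k2 * fst (G t) - snd k2 * snd (G t))
      with (fst k2 * fst (G t) + (- snd k2) * snd (G t)) by ring.
    apply lin_comb_small; [lra | |]; rewrite Rabs_Ropp; assumption. }
  assert (Rabs (fst k2 * snd (G t) + snd k2 * fst (G t)) < eps / 2)
    by (apply lin_comb_small; [lra | exact B2 | exact B1]).
  simpl. split; (eapply Rle_lt_trans; [apply Rabs_triang | lra]).
Qed.

Lemma cvanish_eventually_eq F G T0 : (forall t, t >= T0 -> F t = G t) -> cvanish F -> cvanish G.
Proof.
  intros E H eps He. destruct (H eps He) as [T HT]. exists (Rmax T T0). intros t Ht.
  rewrite <- E; [apply HT|]; [pose proof (Rmax_l T T0) | pose proof (Rmax_r T T0)]; lra.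
Qed.

Lemma exp_decay_small mu t0 A eps : mu > 0 -> eps > 0 ->
  exists T, forall t, t >= T -> exp (- mu * (t - t0)) * A < eps.
Proof.
  intros Hmu He. exists (t0 + Rabs A / (mu * eps)). intros t Ht.
  assert (Hpos : 0 < mu * eps) by nra.
  assert (Hx : mu * (t - t0) * eps >= Rabs A).
  { assert ((t - t0) * (mu * eps) >= Rabs A / (mu * eps) * (mu * eps))
      by (apply Rmult_ge_compat_r; lra).
    replace (Rabs A / (mu * eps) * (mu * eps)) with (Rabs A) in * by (field; lra). nra. }
  assert (Hexp : exp (mu * (t - t0)) >= 1 + mu * (t - t0)).
  { destruct (Req_dec (mu * (t - t0)) 0) as [E|E]; [rewrite E, exp_0; lra|].
    left. apply exp_ineq1. exact E. }
  assert (Einv : exp (- mu * (t - t0)) * exp (mu * (t - t0)) = 1)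
    by (rewrite <- exp_plus; replace (- mu * (t - t0) + mu * (t - t0)) with 0 by ring; apply exp_0).
  pose proof (exp_pos (- mu * (t - t0))). pose proof (Rle_abs A).
  assert (A < exp (mu * (t - t0)) * eps) by nra.
  nra.
Qed.

Lemma sq_lt_abs p e : 0 < e -> p * p < e * e -> Rabs p < e.
Proof.
  intros He H. destruct (Rlt_dec (Rabs p) e) as [|Hn]; auto.
  assert (e * e <= Rabs p * Rabs p) by (apply Rmult_le_compat; lra).
  rewrite <- Rabs_mult, Rabs_right in * by nra. lra.
Qed.

Lemma sq_le_of_abs_lt x e : Rabs x < e -> x * x <= e * e.
Proof.
  intros H. rewrite <- (Rabs_right (x * x)) by nra. rewrite Rabs_mult.
  pose proof (Rabs_pos x). apply Rmult_le_compat; lra.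
Qed.

Lemma young_bound mu p q h1 h2 eta : mu > 0 ->
  h1 * h1 + h2 * h2 <= mu * mu * eta / 2 ->
  2 * (p * h1 + q * h2) <= mu * (p * p + q * q) + mu * eta / 2.
Proof.
  intros Hm Hh.
  assert (E : mu * (mu * (p * p + q * q) + mu * eta / 2 - 2 * (p * h1 + q * h2)) =
              (mu * p - h1) * (mu * p - h1) + (mu * q - h2) * (mu * q - h2)
              + (mu * mu * eta / 2 - (h1 * h1 + h2 * h2))) by field.
  assert (0 <= mu * (mu * (p * p + q * q) + mu * eta / 2 - 2 * (p * h1 + q * h2))).
  { rewrite E. pose proof (Rle_0_sqr (mu * p - h1)). pose proof (Rle_0_sqr (mu * q - h2)).
    unfold Rsqr in *. lra. }
  destruct (Rle_dec (2 * (p * h1 + q * h2)) (mu * (p * p + q * q) + mu * eta / 2)); auto.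
  assert (0 < mu * (2 * (p * h1 + q * h2) - (mu * (p * p + q * q) + mu * eta / 2)))
    by (apply Rmult_lt_0_compat; lra).
  lra.
Qed.

Definition csq (z : Defs.C) : R := fst z * fst z + snd z * snd z.

Lemma cdpl_csq v t d : cdpl v t d ->
  derivable_pt_lim (fun s => csq (v s)) t (2 * (fst (v t) * fst d + snd (v t) * snd d)).
Proof.
  intros [Dp Dq]. unfold csq.
  apply dpl_eqv with ((fst d * fst (v t) + fst (v t) * fst d) + (snd d * snd (v t) + snd (v t) * snd d));
    [|ring].
  apply (derivable_pt_lim_plus (fun s => fst (v s) * fst (v s)) (fun s => snd (v s) * snd (v s)));
    apply derivable_pt_lim_mult; auto.
Qed.

Lemma ccont_csq v t : 0 <= t -> ccont v t -> cont_nonneg (fun s => csq (v s)) t.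
Proof. intros Ht [Hp Hq]. unfold csq. apply cont_nonneg_plus; auto; apply cont_nonneg_mult; auto. Qed.

Section CompanionStability.
Variable ts : nat -> R.
Variable tauD : R.
Hypothesis HtauD : 0 < tauD.
Hypothesis Hts0 : ts 0%nat = 0.
Hypothesis Hdwell : forall k, ts (S k) - ts k >= tauD.

(* A stable scalar mode v' = lam v + h with Re lam = -mu < 0 and vanishing
   input h vanishes: once |h| is small, W = |v|^2 - eps^2/2 satisfies
   W' <= -mu W, and the comparison principle gives W < eps^2/2 eventually. *)
Lemma first_order_vanish (lam : Defs.C) v h : fst lam < 0 ->
  (forall t, 0 <= t -> ccont v t) ->
  (forall t, 0 < t -> (forall k, t <> ts k) -> cdpl v t (Cadd (Cmul lam (v t)) (h t))) ->
  cvanish h -> cvanish v.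
Proof.
  intros Hl Hc Hd Hh eps He.
  set (mu := - fst lam). assert (Hmu : mu > 0) by (unfold mu; lra).
  set (eta := eps * eps). assert (Heta : eta > 0) by (unfold eta; nra).
  destruct (Hh (mu * eps / 2)) as [T1 HT1]; [nra|].
  set (T0 := Rmax T1 0).
  assert (HT0 : 0 <= T0 /\ T1 <= T0) by (split; [apply Rmax_r | apply Rmax_l]).
  set (W := fun s => csq (v s) - eta / 2).
  set (dv := fun s => Cadd (Cmul lam (v s)) (h s)).
  assert (HW : forall t, T0 <= t -> W t <= exp (- mu * (t - T0)) * W T0).
  { intros t Ht. apply (pw_gronwall_upper ts tauD HtauD Hts0 Hdwell W
             (fun s => 2 * (fst (v s) * fst (dv s) + snd (v s) * snd (dv s)) - 0)); [lra | lra | |].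
    - intros s Hs Hn. split.
      + apply (derivable_pt_lim_minus (fun s => csq (v s)) (fun _ => eta / 2));
          [apply cdpl_csq, Hd; auto; lra | apply derivable_pt_lim_const].
      + destruct (HT1 s ltac:(lra)) as [A1 A2].
        assert (Hsmall : fst (h s) * fst (h s) + snd (h s) * snd (h s) <= mu * mu * eta / 2).
        { pose proof (sq_le_of_abs_lt _ _ A1). pose proof (sq_le_of_abs_lt _ _ A2).
          unfold eta. nra. }
        pose proof (young_bound mu (fst (v s)) (snd (v s)) _ _ eta Hmu Hsmall).
        replace (2 * (fst (v s) * fst (dv s) + snd (v s) * snd (dv s)) - 0)
          with (- 2 * mu * csq (v s) + 2 * (fst (v s) * fst (h s) + snd (v s) * snd (h s)))
          by (unfold dv, csq, mu; simpl; ring).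
        unfold W, csq in *. lra.
    - intros s Hs. apply cont_nonneg_minus; [lra | apply ccont_csq, Hc; lra | apply cont_nonneg_const]. }
  destruct (exp_decay_small mu T0 (W T0) (eta / 2) Hmu ltac:(lra)) as [T2 HT2].
  exists (Rmax T0 T2). intros t Ht.
  pose proof (Rmax_l T0 T2); pose proof (Rmax_r T0 T2).
  assert (HWt : W t < eta / 2) by (specialize (HW t ltac:(lra)); specialize (HT2 t ltac:(lra)); lra).
  unfold W, csq, eta in HWt.
  pose proof (Rle_0_sqr (fst (v t))); pose proof (Rle_0_sqr (snd (v t))). unfold Rsqr in *.
  split; apply sq_lt_abs; auto; lra.
Qed.

Definition companion (n : nat) (c : nat -> Defs.C) (w : nat -> R -> Defs.C) (h : R -> Defs.C) : Prop :=
  (forall j, (j < n)%nat -> forall t, 0 <= t -> ccont (w j) t) /\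
  (forall t, 0 < t -> (forall k, t <> ts k) -> forall j, (j < n)%nat ->
     cdpl (w j) t (if Nat.ltb (S j) n then w (S j) t
                   else Cadd (Copp (Csum n (fun k => Cmul (c k) (w k t)))) (h t))).

Lemma root_remainder n c lam : monic_poly (S n) c lam = Czero ->
  Cadd (c O) (Cmul lam (quot_coef c lam n O)) = Czero.
Proof. intros Hlam. rewrite (monic_poly_factor n c lam lam) in Hlam. rewrite <- Hlam. unfold Csub. ring. Qed.

Lemma companion_reduce n c w h lam : monic_poly (S n) c lam = Czero ->
  companion (S n) c w h ->
  companion n (quot_coef c lam n) (fun k t => Csub (w (S k) t) (Cmul lam (w k t))) h.
Proof.
  intros Hlam [Hc Hd]. set (d := quot_coef c lam n).
  assert (Hid : forall t, Cadd (Csum (S n) (fun k => Cmul (c k) (w k t))) (Cmul lam (w n t)) =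
                 Csum n (fun k => Cmul (d k) (Csub (w (S k) t) (Cmul lam (w k t))))).
  { intros t. rewrite (division_identity n c d (fun k => w k t) lam
                         (quot_coef_rec c lam n) (quot_coef_top c lam n)).
    unfold d. rewrite (root_remainder n c lam Hlam). ring. }
  split.
  - intros k Hk t Ht. apply ccont_sub; [lra | | apply ccont_cmul; [lra|]]; apply Hc; lia || lra.
  - intros t Ht Hns k Hk.
    assert (D1 := Hd t Ht Hns (S k) ltac:(lia)). assert (D0 := Hd t Ht Hns k ltac:(lia)).
    replace (Nat.ltb (S k) (S n)) with true in D0 by (symmetry; apply Nat.ltb_lt; lia).
    apply (cdpl_eqv _ _ _ _ (cdpl_sub _ _ t _ _ D1 (cdpl_cmul lam _ t _ D0))).
    destruct (Nat.ltb_spec (S k) n).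
    + replace (Nat.ltb (S (S k)) (S n)) with true by (symmetry; apply Nat.ltb_lt; lia). reflexivity.
    + replace (Nat.ltb (S (S k)) (S n)) with false by (symmetry; apply Nat.ltb_ge; lia).
      replace k with (n - 1)%nat by lia. replace (S (n - 1)) with n by lia.
      fold d. rewrite <- (Hid t). unfold Csub. ring.
Qed.

Lemma companion_head n c w h lam : monic_poly (S n) c lam = Czero ->
  companion (S n) c w h ->
  forall t, 0 < t -> (forall k, t <> ts k) ->
  cdpl (w O) t (Cadd (Cmul lam (w O t))
                  (if Nat.ltb 0 n then Csub (w 1%nat t) (Cmul lam (w O t)) else h t)).
Proof.
  intros Hlam [_ Hd] t Ht Hns.
  apply (cdpl_eqv _ _ _ _ (Hd t Ht Hns O ltac:(lia))).
  destruct (Nat.ltb_spec 1 (S n)); destruct (Nat.ltb_spec 0 n); try lia.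
  - unfold Csub. ring.
  - replace n with O in * by lia. pose proof (root_remainder 0 c lam Hlam) as R.
    unfold quot_coef in R. simpl in R |- *. change (0, 0) with Czero.
    replace (Cmul (c O) (w O t)) with (Csub (Cmul (Cadd (c O) (Cmul lam Cone)) (w O t)) (Cmul lam (w O t)))
      by (unfold Csub; ring).
    rewrite R. unfold Csub. ring.
Qed.

(* Induction on the order, peeling off one
   root at a time. *)
Lemma companion_vanish : forall n (c : nat -> Defs.C) w h,
  (forall z, monic_poly n c z = Czero -> fst z < 0) ->
  companion n c w h -> cvanish h -> forall j, (j < n)%nat -> cvanish (w j).
Proof.
  induction n as [|n IH]; intros c w h Hroots Hsys Hh j Hj; [lia|].
  destruct (monic_poly_root n c) as [lam Hlam].
  set (u := fun k t => Csub (w (S k) t) (Cmul lam (w k t))).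
  assert (Hu : forall k, (k < n)%nat -> cvanish (u k)).
  { apply (IH (quot_coef c lam n) u h); auto.
    - intros z Hz. apply Hroots. rewrite (monic_poly_factor n c lam z), Hz, (root_remainder n c lam Hlam).
      ring.
    - apply companion_reduce; auto. }
  assert (Hw0 : cvanish (w O)).
  { apply (first_order_vanish lam (w O) (fun t => if Nat.ltb 0 n then u O t else h t)).
    - apply Hroots. exact Hlam.
    - intros t Ht. apply (proj1 Hsys); [lia | exact Ht].
    - apply (companion_head n c w h lam Hlam Hsys).
    - destruct (Nat.ltb_spec 0 n); [apply Hu | exact Hh]; lia. }
  induction j; auto.
  apply (cvanish_eventually_eq (fun t => Cadd (Cmul Cone (u j t)) (Cmul lam (w j t))) _ 0).
  - intros. unfold u, Csub. ring.
  - apply cvanish_lin; [apply Hu | apply IHj]; lia.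
Qed.
End CompanionStability.

Section Counting.
Local Open Scope nat_scope.

Lemma reach_boundary_edge (E : nat -> nat -> Prop) (P : nat -> Prop) r v :
  reachable E r v -> P r -> ~ P v -> exists a b, E b a /\ P a /\ ~ P b.
Proof.
  induction 1 as [|u v Hru IH Evu]; intros Hr Hv; [contradiction|].
  destruct (classic (P u)); [exists u, v; auto | apply IH; auto].
Qed.

Fixpoint count (n : nat) (P : nat -> Prop) : nat :=
  match n with
  | O => O
  | S n' => count n' P + (if excluded_middle_informative (P n') then 1 else 0)
  end.

Lemma count_le n P : count n P <= n.
Proof. induction n; simpl; [lia|]. destruct excluded_middle_informative; lia. Qed.

Lemma count_mono n (P Q : nat -> Prop) : (forall i, i < n -> P i -> Q i) ->
  count n P <= count n Q.
Proof.
  induction n; simpl; intros H; [lia|].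
  assert (count n P <= count n Q) by (apply IHn; intros; apply H; auto; lia).
  destruct (excluded_middle_informative (P n)) as [Pn|], (excluded_middle_informative (Q n)) as [|nQn];
    try lia.
  exfalso. apply nQn, H; auto.
Qed.

Lemma count_grow n (P Q : nat -> Prop) : (forall i, i < n -> P i -> Q i) ->
  (exists w, w < n /\ ~ P w /\ Q w) -> count n P + 1 <= count n Q.
Proof.
  intros H [w [Hw [HP HQ]]]. induction n; simpl; [lia|].
  destruct (Nat.eq_dec w n) as [->|Hne].
  - assert (count n P <= count n Q) by (apply count_mono; intros; apply H; auto; lia).
    destruct (excluded_middle_informative (P n)), (excluded_middle_informative (Q n)); tauto || lia.
  - assert (count n P + 1 <= count n Q) by (apply IHn; [intros; apply H; auto | ]; lia).
    destruct (excluded_middle_informative (P n)) as [Pn|], (excluded_middle_informative (Q n)) as [|nQn];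
      try lia.
    exfalso. apply nQn, H; auto.
Qed.

Lemma count_cover n (P Q : nat -> Prop) : (forall i, i < n -> P i \/ Q i) ->
  n <= count n P + count n Q.
Proof.
  induction n; simpl; intros H; [lia|].
  assert (n <= count n P + count n Q) by (apply IHn; intros; apply H; lia).
  destruct (H n ltac:(lia)), (excluded_middle_informative (P n)), (excluded_middle_informative (Q n));
    tauto || lia.
Qed.

(* Two monotone "fronts" P_k and Q_k covering the n agents: if, as long as
   neither front contains everybody, one of them gains an agent at every step,
   then after n+1 steps one front contains everybody, because the sum of the
   two counts starts at >= n, grows by one per step and never exceeds 2n. *)
Lemma two_fronts n (P Q : nat -> nat -> Prop) :
  (forall i, i < n -> P O i \/ Q O i) ->
  (forall k i, i < n -> P k i -> P (S k) i) ->
  (forall k i, i < n -> Q k i -> Q (S k) i) ->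
  (forall k, (forall i, i < n -> P k i \/ Q k i) ->
     ~ (forall i, i < n -> P k i) -> ~ (forall i, i < n -> Q k i) ->
     exists w, w < n /\ ((~ P k w /\ P (S k) w) \/ (~ Q k w /\ Q (S k) w))) ->
  (forall i, i < n -> P (S n) i) \/ (forall i, i < n -> Q (S n) i).
Proof.
  intros Hcov HP HQ Hspread.
  assert (J : forall k, (forall i, i < n -> P k i \/ Q k i) /\
            ((forall i, i < n -> P k i) \/ (forall i, i < n -> Q k i) \/
             n + k <= count n (P k) + count n (Q k))).
  { induction k as [|k [Cov Rest]].
    - split; [exact Hcov|]. right; right. rewrite Nat.add_0_r. apply count_cover, Hcov.
    - split; [intros i Hi; destruct (Cov i Hi); [left; apply HP | right; apply HQ]; auto|].
      destruct Rest as [AllP|[AllQ|Cnt]];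
        [left; intros; apply HP, AllP; auto | right; left; intros; apply HQ, AllQ; auto|].
      destruct (classic (forall i, i < n -> P k i)) as [AllP|NP];
        [left; intros; apply HP, AllP; auto|].
      destruct (classic (forall i, i < n -> Q k i)) as [AllQ|NQ];
        [right; left; intros; apply HQ, AllQ; auto|].
      right; right.
      assert (GP := count_mono n (P k) (P (S k)) (HP k)).
      assert (GQ := count_mono n (Q k) (Q (S k)) (HQ k)).
      destruct (Hspread k Cov NP NQ) as [w [Hw [[Hw1 Hw2]|[Hw1 Hw2]]]].
      + assert (count n (P k) + 1 <= count n (P (S k))) by (apply count_grow; eauto).
        lia.
      + assert (count n (Q k) + 1 <= count n (Q (S k))) by (apply count_grow; eauto).
        lia. }
  destruct (J (S n)) as [_ [AllP|[AllQ|Cnt]]]; auto.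
  pose proof (count_le n (P (S n))). pose proof (count_le n (Q (S n))). lia.
Qed.
End Counting.

Definition pospart (x : R) : R := Rmax x 0.

Lemma pospart_ge0 x : 0 <= pospart x. Proof. apply Rmax_r. Qed.
Lemma pospart_ge x : x <= pospart x. Proof. apply Rmax_l. Qed.

Lemma pospart_cases x : (0 <= x /\ pospart x = x) \/ (x < 0 /\ pospart x = 0).
Proof.
  unfold pospart, Rmax. destruct (Rle_dec x 0); [destruct (Req_dec x 0)|];
    [left | right | left]; split; lra.
Qed.

Lemma pospart_lip a b : Rabs (pospart a - pospart b) <= Rabs (a - b).
Proof.
  destruct (pospart_cases a) as [[A ->]|[A ->]], (pospart_cases b) as [[B ->]|[B ->]];
    unfold Rabs; repeat destruct Rcase_abs; lra.
Qed.

Lemma dpl_pospart_sq_id x : derivable_pt_lim (fun u => pospart u * pospart u) x (2 * pospart x).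
Proof.
  intros eps He. exists (mkposreal eps He). intros h Hh Hhe. simpl in Hhe.
  assert (Hq : Rabs (pospart (x + h) * pospart (x + h) - pospart x * pospart x - 2 * pospart x * h)
               <= h * h).
  { destruct (pospart_cases x) as [[A ->]|[A ->]], (pospart_cases (x + h)) as [[B ->]|[B ->]];
      rewrite Rabs_right; nra. }
  replace ((pospart (x + h) * pospart (x + h) - pospart x * pospart x) / h - 2 * pospart x) with
    ((pospart (x + h) * pospart (x + h) - pospart x * pospart x - 2 * pospart x * h) / h)
    by (field; auto).
  unfold Rdiv. rewrite Rabs_mult, Rabs_inv.
  assert (0 < Rabs h) by (apply Rabs_pos_lt; auto).
  apply Rle_lt_trans with (h * h * / Rabs h);
    [apply Rmult_le_compat_r; [left; apply Rinv_0_lt_compat; auto | exact Hq]|].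
  replace (h * h) with (Rabs h * Rabs h) by (rewrite <- Rabs_mult; apply Rabs_right; nra).
  rewrite Rmult_assoc, Rinv_r, Rmult_1_r by lra. exact Hhe.
Qed.

Lemma dpl_pospart_sq f t d : derivable_pt_lim f t d ->
  derivable_pt_lim (fun s => pospart (f s) * pospart (f s)) t (2 * pospart (f t) * d).
Proof. intros H. apply (derivable_pt_lim_comp f (fun u => pospart u * pospart u)); auto using dpl_pospart_sq_id. Qed.

Lemma cont_nonneg_pospart f t : cont_nonneg f t -> cont_nonneg (fun s => pospart (f s)) t.
Proof.
  intros H eps He. destruct (H eps He) as [d [Hd H']]. exists d; split; auto.
  intros s Hs Hst. eapply Rle_lt_trans; [apply pospart_lip | apply (H' s Hs Hst)].
Qed.

(* Energy estimate behind the maximum principle: with p_j the excess of Y_j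
   over B and weights in [0, D], the excess energy grows at rate <= 2 D n. *)
Lemma excess_energy_bound n (A : nat -> nat -> R) (Y : nat -> R) B D :
  (forall j k, (j < n)%nat -> (k < n)%nat -> 0 <= A j k <= D) ->
  fsum n (fun j => 2 * pospart (Y j - B) * fsum n (fun k => A j k * (Y k - Y j)))
  <= 2 * D * INR n * fsum n (fun j => pospart (Y j - B) * pospart (Y j - B)).
Proof.
  intros HA. set (p := fun j => pospart (Y j - B)).
  apply Rle_trans with (fsum n (fun j => fsum n (fun k => D * (p j * p j + p k * p k)))).
  - apply fsum_le. intros j Hj. rewrite <- fsum_scal. apply fsum_le. intros k Hk.
    destruct (HA j k Hj Hk) as [HA0 HAD].
    assert (P1 : p j * (Y k - Y j) <= p j * p k).
    { unfold p. destruct (pospart_cases (Y j - B)) as [[X ->]|[X ->]]; [|lra].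
      apply Rmult_le_compat_l; [lra|]. pose proof (pospart_ge (Y k - B)). lra. }
    assert (0 <= p j) by apply pospart_ge0. assert (0 <= p k) by apply pospart_ge0.
    assert (P2 : 2 * (p j * p k) <= p j * p j + p k * p k)
      by (pose proof (Rle_0_sqr (p j - p k)); unfold Rsqr in *; lra).
    assert (A j k * (p j * (Y k - Y j)) <= A j k * (p j * p k)) by (apply Rmult_le_compat_l; auto).
    assert (A j k * (p j * p k) <= D * (p j * p k)) by (apply Rmult_le_compat_r; nra).
    assert (D * (2 * (p j * p k)) <= D * (p j * p j + p k * p k)) by (apply Rmult_le_compat_l; lra).
    change (2 * p j * (A j k * (Y k - Y j)) <= D * (p j * p j + p k * p k)).
    replace (2 * p j * (A j k * (Y k - Y j))) with (2 * (A j k * (p j * (Y k - Y j)))) by ring.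
    lra.
  - apply Req_le.
    rewrite (fsum_ext n _ (fun j => INR n * (D * (p j * p j)) + D * fsum n (fun k => p k * p k))).
    + rewrite fsum_plus, fsum_const, (fsum_scal n (INR n)), (fsum_scal n D). unfold p. ring.
    + intros j Hj. rewrite <- fsum_scal, <- fsum_const, <- fsum_plus. apply fsum_ext. intros; ring.
Qed.

Section LaplacianFlow.
Variable ts : nat -> R.
Variable tauD : R.
Hypothesis HtauD : 0 < tauD.
Hypothesis Hts0 : ts 0%nat = 0.
Hypothesis Hdwell : forall k, ts (S k) - ts k >= tauD.
Variable N : nat.
Variable alpha : nat -> nat -> nat -> R.
Variable sigma : R -> nat.
Variable D : R.
Hypothesis HD : D > 0.
Hypothesis Hw0 : forall t, 0 <= t -> forall i j, (i < N)%nat -> (j < N)%nat -> 0 <= alpha (sigma t) i j.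
Hypothesis Hdeg : forall t, 0 <= t -> forall i, (i < N)%nat -> fsum N (fun j => alpha (sigma t) i j) <= D.

Definition laplacian_flow (y : nat -> R -> R) : Prop :=
  (forall i, (i < N)%nat -> forall t, 0 <= t -> cont_nonneg (y i) t) /\
  (forall t, 0 < t -> (forall k, t <> ts k) -> forall i, (i < N)%nat ->
     derivable_pt_lim (y i) t (fsum N (fun j => alpha (sigma t) i j * (y j t - y i t)))).

Lemma laplacian_flow_opp y : laplacian_flow y -> laplacian_flow (fun i t => - y i t).
Proof.
  intros [Hc Hd]. split.
  - intros i Hi t Ht. apply (cont_nonneg_ext (fun s => (-1) * y i s)); [intros; ring|].
    apply cont_nonneg_scal; auto.
  - intros t Ht Hns i Hi.
    apply dpl_eqv with (- fsum N (fun j => alpha (sigma t) i j * (y j t - y i t))).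
    + apply (derivable_pt_lim_opp (y i)). auto.
    + rewrite <- fsum_opp. apply fsum_ext. intros; ring.
Qed.

Lemma alpha_le_deg t i j : 0 <= t -> (i < N)%nat -> (j < N)%nat -> alpha (sigma t) i j <= D.
Proof.
  intros Ht Hi Hj. eapply Rle_trans; [|apply (Hdeg t Ht i Hi)].
  apply (fsum_ge_term N (fun j => alpha (sigma t) i j)); auto.
Qed.

(* Maximum principle: an upper bound of all agents at time t0 persists.  The
   excess energy V = sum_j pospart(y_j - B)^2 vanishes at t0 and satisfies
   V' <= 2 D N V. *)
Lemma flow_upper_invariant y B t0 : laplacian_flow y -> 0 <= t0 ->
  (forall i, (i < N)%nat -> y i t0 <= B) ->
  forall t, t0 <= t -> forall i, (i < N)%nat -> y i t <= B.
Proof.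
  intros [Hc Hd] Ht0 HB t Ht i Hi.
  set (V := fun s => fsum N (fun j => pospart (y j s - B) * pospart (y j s - B))).
  assert (HV : V t <= exp (2 * D * INR N * (t - t0)) * V t0).
  { apply (pw_gronwall_upper ts tauD HtauD Hts0 Hdwell V
      (fun s => fsum N (fun j => 2 * pospart (y j s - B)
                   * fsum N (fun k => alpha (sigma s) j k * (y k s - y j s))))); auto; try lra.
    - intros s Hs Hns. split.
      + apply (dpl_fsum N (fun j s => pospart (y j s - B) * pospart (y j s - B))).
        intros j Hj. apply (dpl_pospart_sq (fun s => y j s - B)).
        apply dpl_eqv with (fsum N (fun k => alpha (sigma s) j k * (y k s - y j s)) - 0); [|ring].
        apply (derivable_pt_lim_minus (y j) (fun _ => B)); [apply Hd; auto; lra | apply derivable_pt_lim_const].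
      + apply (excess_energy_bound N (alpha (sigma s)) (fun j => y j s)).
        intros j k Hj Hk. split; [apply Hw0 | apply alpha_le_deg]; auto; lra.
    - intros s Hs. apply cont_nonneg_fsum; [lra|]. intros j Hj.
      assert (Hp : cont_nonneg (fun s => pospart (y j s - B)) s).
      { apply cont_nonneg_pospart, cont_nonneg_minus; [lra | apply Hc; auto; lra | apply cont_nonneg_const]. }
      apply cont_nonneg_mult; auto; lra. }
  assert (HV0 : V t0 = 0).
  { unfold V. rewrite <- (Rmult_0_r (INR N)), <- fsum_const. apply fsum_ext. intros j Hj.
    destruct (pospart_cases (y j t0 - B)) as [[X ->]|[X ->]]; [|ring].
    specialize (HB j Hj). replace (y j t0 - B) with 0 by lra. ring. }
  assert (Hterm : pospart (y i t - B) * pospart (y i t - B) <= V t).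
  { apply (fsum_ge_term N (fun j => pospart (y j t - B) * pospart (y j t - B))); auto.
    intros j _. pose proof (pospart_ge0 (y j t - B)). nra. }
  rewrite HV0, Rmult_0_r in HV.
  pose proof (pospart_ge (y i t - B)). pose proof (pospart_ge0 (y i t - B)).
  destruct (Rle_dec (y i t) B); auto. nra.
Qed.

Lemma flow_lower_invariant y b t0 : laplacian_flow y -> 0 <= t0 ->
  (forall i, (i < N)%nat -> b <= y i t0) ->
  forall t, t0 <= t -> forall i, (i < N)%nat -> b <= y i t.
Proof.
  intros Hy Ht0 Hb t Ht i Hi.
  assert (- y i t <= - b).
  { apply (flow_upper_invariant (fun i t => - y i t) (- b) t0); auto.
    - apply laplacian_flow_opp; auto.
    - intros j Hj. specialize (Hb j Hj). lra. }
  lra.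
Qed.
(* Gap estimates.  Below, B bounds all agents from time t0 on, and
   B - y_i is the "gap" of agent i. *)

Lemma inflow_le_gap y B t i : 0 <= t -> (i < N)%nat -> (forall j, (j < N)%nat -> y j t <= B) ->
  y i t <= B -> fsum N (fun j => alpha (sigma t) i j * (y j t - y i t)) <= D * (B - y i t).
Proof.
  intros Ht Hi Hb Hbi.
  apply Rle_trans with (fsum N (fun j => alpha (sigma t) i j * (B - y i t))).
  - apply fsum_le. intros j Hj. apply Rmult_le_compat_l; [apply Hw0; auto | specialize (Hb j Hj); lra].
  - rewrite (fsum_ext N _ (fun j => (B - y i t) * alpha (sigma t) i j)), fsum_scal by (intros; ring).
    rewrite Rmult_comm. apply Rmult_le_compat_r; [lra | apply Hdeg; auto].
Qed.

Lemma gap_decay y B t0 i s t l : laplacian_flow y -> 0 <= t0 ->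
  (forall j u, (j < N)%nat -> t0 <= u -> y j u <= B) -> (i < N)%nat -> t0 <= s -> s <= t ->
  B - y i s >= l -> B - y i t >= l * exp (- D * (t - s)).
Proof.
  intros [Hc Hd] Ht0 Hb Hi Hs Hst Hl.
  assert (H : exp (- D * (t - s)) * (B - y i s) <= B - y i t).
  { apply (pw_gronwall_lower ts tauD HtauD Hts0 Hdwell (fun u => B - y i u)
             (fun u => 0 - fsum N (fun j => alpha (sigma u) i j * (y j u - y i u)))); auto; try lra.
    - intros u Hu Hns. split.
      + apply (derivable_pt_lim_minus (fun _ => B) (y i)); [apply derivable_pt_lim_const | apply Hd; auto; lra].
      + assert (fsum N (fun j => alpha (sigma u) i j * (y j u - y i u)) <= D * (B - y i u))
          by (apply inflow_le_gap; try lra; auto; intros; apply Hb; auto; lra).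
        lra.
    - intros u Hu. apply cont_nonneg_minus; [lra | apply cont_nonneg_const | apply Hc; auto; lra]. }
  assert (exp (- D * (t - s)) * l <= exp (- D * (t - s)) * (B - y i s))
    by (apply Rmult_le_compat_l; [left; apply exp_pos | lra]).
  lra.
Qed.

Lemma gap_pull y B t0 w u s1 s2 l amin : laplacian_flow y -> 0 <= t0 ->
  (forall j v, (j < N)%nat -> t0 <= v -> y j v <= B) -> (w < N)%nat -> (u < N)%nat ->
  t0 <= s1 -> s1 <= s2 -> 0 <= amin -> 0 <= l ->
  (forall t, s1 < t < s2 -> amin <= alpha (sigma t) w u) ->
  (forall t, s1 <= t <= s2 -> B - y u t >= l) ->
  B - y w s2 >= amin * l / D * (1 - exp (- D * (s2 - s1))).
Proof.
  intros [Hc Hd] Ht0 Hb Hw Hu Hs1 Hs12 Ham Hl Hal Hgu.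
  set (c := amin * l / D).
  assert (Hc0 : 0 <= c) by (unfold c; apply Rmult_le_pos; [nra | left; apply Rinv_0_lt_compat; lra]).
  assert (H : exp (- D * (s2 - s1)) * (B - y w s1 - c) <= B - y w s2 - c).
  { apply (pw_gronwall_lower ts tauD HtauD Hts0 Hdwell (fun v => B - y w v - c)
             (fun v => 0 - fsum N (fun j => alpha (sigma v) w j * (y j v - y w v)) - 0)); auto; try lra.
    - intros v Hv Hns. assert (Hv0 : 0 <= v) by lra. split.
      + apply (derivable_pt_lim_minus (fun v => B - y w v) (fun _ => c)); [|apply derivable_pt_lim_const].
        apply (derivable_pt_lim_minus (fun _ => B) (y w)); [apply derivable_pt_lim_const | apply Hd; auto; lra].
      + assert (Split : fsum N (fun j => alpha (sigma v) w j * (y j v - y w v)) =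
                  fsum N (fun j => alpha (sigma v) w j) * (B - y w v)
                  - fsum N (fun j => alpha (sigma v) w j * (B - y j v))).
        { rewrite Rmult_comm, <- fsum_scal, <- fsum_minus. apply fsum_ext. intros; ring. }
        assert (G1 : alpha (sigma v) w u * (B - y u v) <= fsum N (fun j => alpha (sigma v) w j * (B - y j v))).
        { apply (fsum_ge_term N (fun j => alpha (sigma v) w j * (B - y j v))); auto.
          intros j Hj. apply Rmult_le_pos; [apply Hw0; auto | specialize (Hb j v Hj ltac:(lra)); lra]. }
        assert (G2 : amin * l <= alpha (sigma v) w u * (B - y u v)).
        { apply Rmult_le_compat; try lra; [apply Hal; lra | specialize (Hgu v ltac:(lra)); lra]. }
        assert (G3 : fsum N (fun j => alpha (sigma v) w j) * (B - y w v) <= D * (B - y w v)).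
        { apply Rmult_le_compat_r; [specialize (Hb w v Hw ltac:(lra)); lra | apply Hdeg; auto]. }
        assert (D * c = amin * l) by (unfold c; field; lra).
        lra.
    - intros v Hv. apply cont_nonneg_minus; [lra | | apply cont_nonneg_const].
      apply cont_nonneg_minus; [lra | apply cont_nonneg_const | apply Hc; auto; lra]. }
  assert (B - y w s1 >= 0) by (specialize (Hb w s1 Hw ltac:(lra)); lra).
  assert (exp (- D * (s2 - s1)) * (- c) <= exp (- D * (s2 - s1)) * (B - y w s1 - c))
    by (apply Rmult_le_compat_l; [left; apply exp_pos | lra]).
  fold c. lra.
Qed.

Section Connectivity.
Hypothesis Hsig : forall k t, ts k <= t < ts (S k) -> sigma t = sigma (ts k).

Lemma active_window s : 0 <= s -> exists s1, s - tauD / 2 <= s1 <= s /\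
  forall t, s1 < t < s1 + tauD / 2 -> sigma t = sigma s.
Proof.
  intros Hs. destruct (ts_interval ts tauD HtauD Hts0 Hdwell s Hs) as [k Hk].
  pose proof (Hdwell k).
  assert (Hsk : sigma s = sigma (ts k)) by (apply Hsig; auto).
  destruct (Rle_dec (s + tauD / 2) (ts (S k))).
  - exists s. split; [lra|]. intros t Ht. rewrite Hsk. apply Hsig. lra.
  - exists (s - tauD / 2). split; [lra|]. intros t Ht. rewrite Hsk. apply Hsig. lra.
Qed.

Variable amin : R.
Hypothesis Hamin : 0 < amin.
Hypothesis Hamin_le : amin <= D.
Hypothesis Hmin : forall t, 0 <= t -> forall i j, (i < N)%nat -> (j < N)%nat ->
  0 < alpha (sigma t) i j -> amin <= alpha (sigma t) i j.
Variable T : R.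
Hypothesis HT : T > 0.

(* One round of the argument lasts [round]; a gap l present at the start of
   a round is still >= gam l at its end. *)
Definition round := T + tauD.
Definition decay_factor := exp (- D * round).
Definition pull_factor := amin * (1 - exp (- D * (tauD / 2))) / D.
Definition gam := pull_factor * decay_factor * decay_factor.

Lemma decay_factor_bounds : 0 < decay_factor <= 1.
Proof.
  unfold decay_factor, round. split; [apply exp_pos|]. rewrite <- exp_0.
  assert (0 < D * (T + tauD)) by (apply Rmult_lt_0_compat; lra).
  left. apply exp_increasing. lra.
Qed.

Lemma pull_factor_bounds : 0 < pull_factor <= 1.
Proof.
  unfold pull_factor. pose proof (exp_pos (- D * (tauD / 2))).
  assert (exp (- D * (tauD / 2)) < 1).
  { rewrite <- exp_0. apply exp_increasing. assert (0 < D * (tauD / 2)) by (apply Rmult_lt_0_compat; lra). lra. }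
  split; [apply Rdiv_lt_0_compat; [apply Rmult_lt_0_compat|]; lra|].
  apply Rmult_le_reg_r with D; [lra|]. unfold Rdiv. rewrite Rmult_assoc, Rinv_l by lra. nra.
Qed.

Lemma gam_bounds : 0 < gam <= 1 /\ gam <= decay_factor.
Proof.
  pose proof decay_factor_bounds. pose proof pull_factor_bounds.
  assert (pull_factor * decay_factor <= 1) by nra.
  unfold gam. repeat split; [apply Rmult_lt_0_compat; [apply Rmult_lt_0_compat|] | | ]; nra.
Qed.

Lemma gam_pow_bounds n : 0 < gam ^ n <= 1.
Proof.
  destruct gam_bounds as [[Hg0 Hg1] _].
  split; [apply pow_lt | rewrite <- (pow1 n); apply pow_incr]; lra.
Qed.

Lemma gap_persist y B e i l : laplacian_flow y -> 0 <= e ->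
  (forall j u, (j < N)%nat -> e <= u -> y j u <= B) -> (i < N)%nat -> 0 <= l ->
  B - y i e >= l -> B - y i (e + round) >= gam * l.
Proof.
  intros Hy He Hb Hi Hl H.
  assert (A := gap_decay y B e i e (e + round) l Hy He Hb Hi ltac:(lra) ltac:(unfold round; lra) H).
  replace (e + round - e) with round in A by ring. fold decay_factor in A.
  destruct gam_bounds as [_ G]. assert (gam * l <= decay_factor * l) by (apply Rmult_le_compat_r; lra).
  lra.
Qed.

(* Along a path from r
   to that agent there is an edge b <- a leaving the set of gapped agents; a
   keeps its gap while the edge is active for a time tauD/2. *)
Lemma gap_spread y B e l r : laplacian_flow y -> 0 <= e ->
  (forall j u, (j < N)%nat -> e <= u -> y j u <= B) -> 0 <= l ->
  (r < N)%nat -> B - y r e >= l ->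
  (forall v, (v < N)%nat -> reachable (union_edge N alpha sigma (e + tauD / 2) T) r v) ->
  ~ (forall i, (i < N)%nat -> B - y i e >= l) ->
  exists w, (w < N)%nat /\ ~ (B - y w e >= l) /\ B - y w (e + round) >= gam * l.
Proof.
  intros Hy He Hb Hl Hr Hrl Hreach Hnall.
  destruct (not_all_ex_not _ _ Hnall) as [v Hv].
  assert (Hv' : (v < N)%nat /\ ~ (B - y v e >= l)) by (split; [apply NNPP | ]; tauto).
  destruct Hv' as [Hvn Hvl].
  destruct (reach_boundary_edge _ (fun i => B - y i e >= l) r v (Hreach v Hvn) Hrl Hvl)
    as [a [b [[Hb' [Ha' [s [Hs Hal]]]] [Pa Pb]]]].
  destruct (active_window s ltac:(lra)) as [s1 [Hs1 Hsc]].
  pose proof decay_factor_bounds. pose proof pull_factor_bounds.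
  assert (Hexp : forall x, 0 <= x <= round -> exp (- D * x) >= decay_factor).
  { intros x Hx. unfold decay_factor. apply Rle_ge.
    destruct (Req_dec x round) as [->|Hne]; [lra|]. left. apply exp_increasing.
    assert (D * x < D * round) by (apply Rmult_lt_compat_l; lra). lra. }
  assert (Hga : forall t, s1 <= t <= s1 + tauD / 2 -> B - y a t >= l * decay_factor).
  { intros t Ht. assert (A := gap_decay y B e a e t l Hy He Hb Ha' ltac:(lra) ltac:(lra) Pa).
    assert (exp (- D * (t - e)) >= decay_factor) by (apply Hexp; unfold round; lra).
    assert (l * exp (- D * (t - e)) >= l * decay_factor) by (apply Rmult_ge_compat_l; lra). lra. }
  assert (Hp : B - y b (s1 + tauD / 2) >= pull_factor * l * decay_factor).
  { replace (pull_factor * l * decay_factor)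
      with (amin * (l * decay_factor) / D * (1 - exp (- D * (s1 + tauD / 2 - s1)))).
    - apply (gap_pull y B e b a s1 (s1 + tauD / 2) (l * decay_factor) amin); auto; try lra.
      + apply Rmult_le_pos; lra.
      + intros t Ht. rewrite Hsc by lra. apply Hmin; auto; lra.
    - unfold pull_factor. replace (s1 + tauD / 2 - s1) with (tauD / 2) by ring. field. lra. }
  exists b. repeat split; auto.
  assert (A := gap_decay y B e b (s1 + tauD / 2) (e + round) (pull_factor * l * decay_factor)
                 Hy He Hb Hb' ltac:(lra) ltac:(unfold round; lra) Hp).
  assert (exp (- D * (e + round - (s1 + tauD / 2))) >= decay_factor) by (apply Hexp; unfold round; lra).
  assert (0 <= pull_factor * l * decay_factor) by (apply Rmult_le_pos; [apply Rmult_le_pos|]; lra).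
  assert (pull_factor * l * decay_factor * exp (- D * (e + round - (s1 + tauD / 2)))
          >= pull_factor * l * decay_factor * decay_factor) by (apply Rmult_ge_compat_l; lra).
  unfold gam. lra.
Qed.
Hypothesis Hcon : forall t, 0 <= t -> exists r, (r < N)%nat /\
  forall v, (v < N)%nat -> reachable (union_edge N alpha sigma t T) r v.

(* At round k, P k (resp. Q k) is the
   set of agents at distance >= gam^k (B - b)/2 below B (resp. above b):
   initially every agent is in one of them, both persist, and by
   connectivity one of them grows while neither is full ([two_fronts]). *)
Lemma hull_end_gap y t0 b B : laplacian_flow y -> 0 <= t0 -> b <= B ->
  (forall i, (i < N)%nat -> b <= y i t0 <= B) ->
  (forall i, (i < N)%nat -> B - y i (t0 + INR (S N) * round) >= gam ^ (S N) * ((B - b) / 2)) \/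
  (forall i, (i < N)%nat -> y i (t0 + INR (S N) * round) - b >= gam ^ (S N) * ((B - b) / 2)).
Proof.
  intros Hy Ht0 HbB Hinit.
  assert (HU : forall j u, (j < N)%nat -> t0 <= u -> y j u <= B).
  { intros j u Hj Hu. apply (flow_upper_invariant y B t0 Hy Ht0); auto. intros; apply Hinit; auto. }
  set (ny := fun i t => - y i t).
  assert (Hny : laplacian_flow ny) by (apply laplacian_flow_opp; auto).
  assert (HnU : forall j u, (j < N)%nat -> t0 <= u -> ny j u <= - b).
  { intros j u Hj Hu. unfold ny. assert (b <= y j u); [|lra].
    apply (flow_lower_invariant y b t0 Hy Ht0); auto. intros; apply Hinit; auto. }
  set (e := fun k => t0 + INR k * round).
  set (eps := fun k => gam ^ k * ((B - b) / 2)).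
  assert (He : forall k, t0 <= e k) by (intros k; unfold e, round; pose proof (pos_INR k); nra).
  assert (HeS : forall k, e (S k) = e k + round) by (intros k; unfold e; rewrite S_INR; ring).
  destruct gam_bounds as [[Hg0 Hg1] _].
  assert (Heps : forall k, 0 <= eps k)
    by (intros k; unfold eps; apply Rmult_le_pos; [apply pow_le; lra | lra]).
  assert (HepsS : forall k, eps (S k) = gam * eps k) by (intros k; unfold eps; simpl; ring).
  set (P := fun k i => B - y i (e k) >= eps k).
  set (Q := fun k i => - b - ny i (e k) >= eps k).
  assert (Hfront : (forall i, (i < N)%nat -> P (S N) i) \/ (forall i, (i < N)%nat -> Q (S N) i)).
  { apply two_fronts.
    - intros i Hi. unfold P, Q, ny, e, eps. simpl. rewrite Rmult_0_l, Rplus_0_r, Rmult_1_l.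
      destruct (Hinit i Hi). destruct (Rle_dec (y i t0) ((B + b) / 2)); [left | right]; lra.
    - intros k i Hi H. unfold P. rewrite HeS, HepsS.
      apply (gap_persist y B (e k) i (eps k) Hy); auto;
        [pose proof (He k); lra | intros; apply HU; auto; pose proof (He k); lra].
    - intros k i Hi H. unfold Q. rewrite HeS, HepsS.
      apply (gap_persist ny (- b) (e k) i (eps k) Hny); auto;
        [pose proof (He k); lra | intros; apply HnU; auto; pose proof (He k); lra].
    - intros k Cov NP NQ.
      destruct (Hcon (e k + tauD / 2)) as [r [Hr Hreach]]; [pose proof (He k); lra|].
      destruct (Cov r Hr) as [Pr|Qr].
      + destruct (gap_spread y B (e k) (eps k) r Hy) as [w [Hw [Hw1 Hw2]]]; auto;
          [pose proof (He k); lra | intros; apply HU; auto; pose proof (He k); lra |].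
        exists w. split; [exact Hw|]. left. unfold P. rewrite HeS, HepsS. auto.
      + destruct (gap_spread ny (- b) (e k) (eps k) r Hny) as [w [Hw [Hw1 Hw2]]]; auto;
          [pose proof (He k); lra | intros; apply HnU; auto; pose proof (He k); lra |].
        exists w. split; [exact Hw|]. right. unfold Q. rewrite HeS, HepsS. auto. }
  destruct Hfront as [AllP|AllQ]; [left | right]; intros i Hi;
    [specialize (AllP i Hi) | specialize (AllQ i Hi)]; unfold P, Q, ny, e, eps in *; lra.
Qed.

Lemma hull_contraction y t0 b B : laplacian_flow y -> 0 <= t0 -> b <= B ->
  (forall i, (i < N)%nat -> b <= y i t0 <= B) ->
  exists b' B', b' <= B' /\ B' - b' = (1 - gam ^ (S N) / 2) * (B - b) /\
    forall i t, (i < N)%nat -> t0 + INR (S N) * round <= t -> b' <= y i t <= B'.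
Proof.
  intros Hy Ht0 HbB Hinit.
  assert (Hend := hull_end_gap y t0 b B Hy Ht0 HbB Hinit).
  set (t1 := t0 + INR (S N) * round) in *.
  set (g := gam ^ (S N) * ((B - b) / 2)) in *.
  assert (Ht1 : t0 <= t1) by (unfold t1, round; pose proof (pos_INR (S N)); nra).
  assert (Hg : 0 <= g <= (B - b) / 2).
  { pose proof (gam_pow_bounds (S N)). unfold g. split; [apply Rmult_le_pos; lra|].
    assert (gam ^ S N * ((B - b) / 2) <= 1 * ((B - b) / 2)) by (apply Rmult_le_compat_r; lra). lra. }
  assert (HU : forall i t, (i < N)%nat -> t0 <= t -> y i t <= B).
  { intros i t Hi Ht. apply (flow_upper_invariant y B t0 Hy Ht0); auto. intros; apply Hinit; auto. }
  assert (HL : forall i t, (i < N)%nat -> t0 <= t -> b <= y i t).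
  { intros i t Hi Ht. apply (flow_lower_invariant y b t0 Hy Ht0); auto. intros; apply Hinit; auto. }
  destruct Hend as [Low|High].
  - exists b, (B - g). split; [|split]; [lra | unfold g; field |].
    intros i t Hi Ht. split; [apply HL; auto; lra|].
    apply (flow_upper_invariant y (B - g) t1 Hy); auto; [lra|].
    intros j Hj. specialize (Low j Hj). lra.
  - exists (b + g), B. split; [|split]; [lra | unfold g; field |].
    intros i t Hi Ht. split; [|apply HU; auto; lra].
    apply (flow_lower_invariant y (b + g) t1 Hy); auto; [lra|].
    intros j Hj. specialize (High j Hj). lra.
Qed.

(* Consensus: the hull of the agents shrinks geometrically, by the factor
   1 - gam^(N+1)/2 every N+1 rounds, so all pairwise differences vanish. *)
Lemma consensus y : laplacian_flow y -> forall eps, eps > 0 -> exists T0, forall t, t >= T0 ->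
  forall i j, (i < N)%nat -> (j < N)%nat -> Rabs (y i t - y j t) < eps.
Proof.
  intros Hy eps Heps.
  destruct (fin_bounds N (fun i => y i 0)) as [b0 [B0 [Hb0 Hinit]]].
  set (Q := INR (S N) * round).
  set (rho := 1 - gam ^ (S N) / 2).
  assert (Hrho : 0 < rho < 1) by (pose proof (gam_pow_bounds (S N)); unfold rho; lra).
  assert (HQ : 0 <= Q) by (unfold Q, round; pose proof (pos_INR (S N)); apply Rmult_le_pos; lra).
  assert (Hiter : forall n, exists b B, b <= B /\ B - b <= rho ^ n * (B0 - b0) /\
     forall i t, (i < N)%nat -> INR n * Q <= t -> b <= y i t <= B).
  { induction n as [|n [b [B [HbB [Hsp Hbd]]]]].
    - exists b0, B0. split; [exact Hb0|]. split; [simpl; lra|]. intros i t Hi Ht.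
      simpl in Ht. rewrite Rmult_0_l in Ht.
      split; [apply (flow_lower_invariant y b0 0 Hy) | apply (flow_upper_invariant y B0 0 Hy)];
        auto; try lra; intros; apply Hinit; auto.
    - assert (Hn0 : 0 <= INR n * Q) by (apply Rmult_le_pos; auto; apply pos_INR).
      destruct (hull_contraction y (INR n * Q) b B Hy Hn0 HbB (fun i Hi => Hbd i (INR n * Q) Hi (Rle_refl _)))
        as [b' [B' [Hb'B' [Hlen Hbd']]]].
      exists b', B'. split; [exact Hb'B'|]. split.
      + rewrite Hlen. fold rho. rewrite <- tech_pow_Rmult, Rmult_assoc. apply Rmult_le_compat_l; lra.
      + intros i t Hi Ht. apply Hbd'; auto. rewrite S_INR in Ht. unfold Q in *. lra. }
  destruct (pow_lt_1_zero rho ltac:(rewrite Rabs_right; lra) (eps / (B0 - b0 + 1))) as [n0 Hn0];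
    [apply Rdiv_lt_0_compat; lra|].
  destruct (Hiter n0) as [b [B [HbB [Hsp Hbd]]]].
  exists (INR n0 * Q). intros t Ht i j Hi Hj.
  destruct (Hbd i t Hi ltac:(lra)). destruct (Hbd j t Hj ltac:(lra)).
  specialize (Hn0 n0 (le_n _)). rewrite Rabs_right in Hn0 by (left; apply pow_lt; lra).
  assert (rho ^ n0 * (B0 - b0) <= eps / (B0 - b0 + 1) * (B0 - b0)) by (apply Rmult_le_compat_r; lra).
  assert (eps / (B0 - b0 + 1) * (B0 - b0) < eps).
  { apply Rmult_lt_reg_r with (B0 - b0 + 1); [lra|]. unfold Rdiv.
    replace (eps * / (B0 - b0 + 1) * (B0 - b0) * (B0 - b0 + 1)) with (eps * (B0 - b0)) by (field; lra).
    nra. }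
  apply Rabs_def1; lra.
Qed.
End Connectivity.
End LaplacianFlow.

Lemma dot_minus m v X Y : dot m v (fun l => X l - Y l) = dot m v X - dot m v Y.
Proof. unfold dot. rewrite <- fsum_minus. apply fsum_ext. intros; ring. Qed.

Lemma dot_K1 m' a X : dot (S m') (K1vec a) X = - fsum m' (fun l => a (S l) * X (S l)).
Proof.
  unfold dot. rewrite fsum_shift, <- fsum_opp. unfold K1vec at 1. simpl. rewrite Rmult_0_l, Rplus_0_l.
  apply fsum_ext. intros. unfold K1vec. simpl. ring.
Qed.

Lemma K2vec_lt m' a l : (l < m')%nat -> K2vec (S m') a l = a (S l).
Proof.
  intros H. unfold K2vec. replace (Nat.ltb (l + 1) (S m')) with true by (symmetry; apply Nat.ltb_lt; lia).
  f_equal; lia.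
Qed.

Lemma K2vec_last m' a : K2vec (S m') a m' = 1.
Proof. unfold K2vec. replace (Nat.ltb (m' + 1) (S m')) with false by (symmetry; apply Nat.ltb_ge; lia). reflexivity. Qed.

(* K2 (A x_i + B u_i) = sum_j alpha_ij (K2 x_j - K2 x_i): since K2 A + K1 = 0,
   the outputs K2 x_i follow the consensus dynamics. *)
Lemma output_rhs m' a N alpha k X i :
  fsum (S m') (fun l => K2vec (S m') a l * rhs N (S m') a alpha k X i l) =
  fsum N (fun j => alpha k i j * (dot (S m') (K2vec (S m') a) (X j) - dot (S m') (K2vec (S m') a) (X i))).
Proof.
  simpl fsum. rewrite K2vec_last. unfold rhs at 2.
  replace (Nat.ltb (m' + 1) (S m')) with false by (symmetry; apply Nat.ltb_ge; lia).
  rewrite (fsum_ext m' _ (fun l => a (S l) * X i (S l))).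
  - unfold input. rewrite dot_K1.
    rewrite (fsum_ext N (fun j => alpha k i j * dot (S m') (K2vec (S m') a) (fun l => X i l - X j l))
               (fun j => - (alpha k i j * (dot (S m') (K2vec (S m') a) (X j) - dot (S m') (K2vec (S m') a) (X i))))).
    + rewrite fsum_opp. ring.
    + intros j Hj. rewrite dot_minus. ring.
  - intros l Hl. rewrite K2vec_lt by auto. unfold rhs.
    replace (Nat.ltb (l + 1) (S m')) with true by (symmetry; apply Nat.ltb_lt; lia).
    replace (l + 1)%nat with (S l) by lia. reflexivity.
Qed.

(* For a balanced graph without self-loops, the Laplacian flow preserves the
   sum of the states: column sums of the weights equal row sums. *)
Lemma balanced_flow_sum N alpha k (Y : nat -> R) :
  (forall i, (i < N)%nat -> alpha k i i = 0) -> balanced N alpha k ->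
  fsum N (fun j => fsum N (fun i => alpha k j i * (Y i - Y j))) = 0.
Proof.
  intros Hloop Hb.
  assert (Col : forall j, (j < N)%nat -> fsum N (fun i => alpha k i j) = fsum N (fun l => alpha k j l)).
  { intros j Hj. specialize (Hb j Hj).
    rewrite (fsum_ext N _ (fun i => (if Nat.eqb j i then fsum N (fun l => alpha k j l) + alpha k j j else 0)
                                     - alpha k i j)) in Hb.
    - rewrite fsum_minus, fsum_delta, Hloop in Hb by auto. lra.
    - intros i Hi. unfold laplacian. destruct (Nat.eqb_spec i j), (Nat.eqb_spec j i); try lia; [subst|]; ring. }
  rewrite (fsum_ext N _ (fun j => fsum N (fun i => alpha k j i * Y i) - fsum N (fun i => alpha k j i) * Y j)).
  - rewrite fsum_minus, fsum_swap.
    rewrite (fsum_ext N (fun i => fsum N (fun j => alpha k j i * Y i)) (fun i => fsum N (fun l => alpha k i l) * Y i));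
      [ring|].
    intros i Hi. rewrite <- Col by auto. rewrite (Rmult_comm _ (Y i)), <- fsum_scal. apply fsum_ext; intros; ring.
  - intros j Hj. rewrite (Rmult_comm _ (Y j)), <- fsum_scal, <- fsum_minus. apply fsum_ext; intros; ring.
Qed.

Lemma hurwitz_a1_nonzero m' a : (1 <= m')%nat -> hurwitz (S m') a -> a 1%nat <> 0.
Proof.
  intros Hm Hhur Ha. assert (Hz : char_poly (S m') a (0, 0) = (0, 0)).
  { unfold char_poly. replace (S m' - 1)%nat with m' by lia.
    assert (Hp : forall k, Cpow (0, 0) (S k) = Czero) by (intros k; simpl; unfold Cmul, Czero; simpl; f_equal; ring).
    destruct m' as [|m'']; [lia|]. rewrite Hp.
    rewrite (Csum_ext (S m'') _ (fun _ => Czero)), Csum_zero; [unfold Czero, Cadd; simpl; f_equal; ring|].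
    intros j Hj. destruct j; [simpl; rewrite Ha | rewrite Hp]; unfold Cmul, Czero; simpl; f_equal; ring. }
  pose proof (Hhur _ Hz). simpl in *. lra.
Qed.

Lemma family_degree_bound M N (alpha : nat -> nat -> nat -> R) :
  exists D, D > 0 /\ forall k i, (k < M)%nat -> (i < N)%nat -> fsum N (fun j => alpha k i j) <= D.
Proof.
  induction M as [|M [D [HD HDb]]]; [exists 1; split; [lra | intros; lia]|].
  destruct (fin_bounds N (fun i => fsum N (fun j => alpha M i j))) as [b [B [_ HB]]].
  exists (Rmax D B). pose proof (Rmax_l D B); pose proof (Rmax_r D B).
  split; [lra|]. intros k i Hk Hi. destruct (Nat.eq_dec k M) as [->|Hne].
  - destruct (HB i Hi). lra.
  - pose proof (HDb k i ltac:(lia) Hi). lra.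
Qed.

Lemma uniform_positive_const n (Phi : nat -> R -> Prop) :
  (forall k c c', 0 < c' <= c -> Phi k c -> Phi k c') ->
  (forall k, (k < n)%nat -> exists c, 0 < c /\ Phi k c) ->
  exists c, 0 < c /\ forall k, (k < n)%nat -> Phi k c.
Proof.
  intros Hmono. induction n as [|n IH]; intros H; [exists 1; split; [lra | intros; lia]|].
  destruct IH as [c [Hc Hall]]; [intros; apply H; lia|].
  destruct (H n ltac:(lia)) as [c' [Hc' Hn]].
  exists (Rmin c c'). pose proof (Rmin_l c c'); pose proof (Rmin_r c c').
  assert (0 < Rmin c c') by (apply Rmin_pos; lra).
  split; auto. intros k Hk. destruct (Nat.eq_dec k n) as [->|Hne].
  - apply (Hmono n c'); [lra | exact Hn].
  - apply (Hmono k c); [lra | apply Hall; lia].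
Qed.

Lemma family_min_weight M N (alpha : nat -> nat -> nat -> R) : exists c, 0 < c /\
  forall k, (k < M)%nat -> forall i, (i < N)%nat -> forall j, (j < N)%nat ->
    0 < alpha k i j -> c <= alpha k i j.
Proof.
  apply (uniform_positive_const M (fun k c => forall i, (i < N)%nat -> forall j, (j < N)%nat ->
                                     0 < alpha k i j -> c <= alpha k i j));
    [intros k c c' Hc H i Hi j Hj Hp; specialize (H i Hi j Hj Hp); lra|].
  intros k _. apply (uniform_positive_const N (fun i c => forall j, (j < N)%nat ->
                                     0 < alpha k i j -> c <= alpha k i j));
    [intros i c c' Hc H j Hj Hp; specialize (H j Hj Hp); lra|].
  intros i _. apply (uniform_positive_const N (fun j c => 0 < alpha k i j -> c <= alpha k i j));
    [intros j c c' Hc H Hp; specialize (H Hp); lra|].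
  intros j _. destruct (Rlt_dec 0 (alpha k i j)).
  - exists (alpha k i j). split; [auto | intros; lra].
  - exists 1. split; [lra | intros; lra].
Qed.

Lemma converges_ext f g L : (forall t, f t = g t) -> converges_to f L -> converges_to g L.
Proof. intros E H eps He. destruct (H eps He) as [T HT]. exists T. intros t Ht. rewrite <- E. auto. Qed.

Lemma converges_plus f g L M : converges_to f L -> converges_to g M ->
  converges_to (fun t => f t + g t) (L + M).
Proof.
  intros Hf Hg eps He. destruct (Hf (eps / 2)) as [T1 H1]; [lra|]. destruct (Hg (eps / 2)) as [T2 H2]; [lra|].
  exists (Rmax T1 T2). intros t Ht. pose proof (Rmax_l T1 T2); pose proof (Rmax_r T1 T2).
  replace (f t + g t - (L + M)) with ((f t - L) + (g t - M)) by ring.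
  eapply Rle_lt_trans; [apply Rabs_triang|]. specialize (H1 t ltac:(lra)). specialize (H2 t ltac:(lra)). lra.
Qed.

Lemma converges_scal c f L : converges_to f L -> converges_to (fun t => c * f t) (c * L).
Proof.
  intros Hf eps He. destruct (Hf (eps / (Rabs c + 1))) as [T HT].
  { apply Rdiv_lt_0_compat; [lra|]. pose proof (Rabs_pos c). lra. }
  exists T. intros t Ht. specialize (HT t Ht).
  replace (c * f t - c * L) with (c * (f t - L)) by ring. rewrite Rabs_mult.
  pose proof (Rabs_pos c). pose proof (Rabs_pos (f t - L)).
  assert (eps / (Rabs c + 1) * (Rabs c + 1) = eps) by (field; lra).
  nra.
Qed.

Lemma converges_fsum n (F : nat -> R -> R) (L : nat -> R) :
  (forall k, (k < n)%nat -> converges_to (F k) (L k)) ->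
  converges_to (fun t => fsum n (fun k => F k t)) (fsum n L).
Proof.
  induction n; intros H; simpl.
  - intros eps He. exists 0. intros. rewrite Rminus_0_r, Rabs_R0. lra.
  - apply (converges_plus (fun t => fsum n (fun k => F k t)) (F n)); [apply IHn; intros |]; apply H; lia.
Qed.

Section Agents.
Variables (N m' : nat) (a : nat -> R) (alpha : nat -> nat -> nat -> R) (sigma : R -> nat).
Variables (ts : nat -> R) (x : nat -> R -> nat -> R).
Hypothesis Hsol : is_solution N (S m') a alpha sigma ts x.

Definition output (j : nat) (t : R) : R := dot (S m') (K2vec (S m') a) (x j t).

Lemma output_flow : laplacian_flow ts N alpha sigma output.
Proof.
  destruct Hsol as [Hxc Hxd]. split.
  - intros j Hj t Ht. unfold output, dot. apply cont_nonneg_fsum; auto. intros l Hl.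
    apply cont_nonneg_scal; auto. exact (Hxc j l Hj Hl t Ht).
  - intros t Ht Hns j Hj.
    apply dpl_eqv with (fsum (S m') (fun l => K2vec (S m') a l * rhs N (S m') a alpha (sigma t) (fun j => x j t) j l)).
    + unfold output, dot. apply (dpl_fsum (S m') (fun l s => K2vec (S m') a l * x j s l)).
      intros l Hl. apply derivable_pt_lim_scal. apply Hxd; auto.
    + rewrite output_rhs. reflexivity.
Qed.

Lemma output_sum_conserved tauD : 0 < tauD -> ts 0%nat = 0 -> (forall k, ts (S k) - ts k >= tauD) ->
  (forall t i, 0 <= t -> (i < N)%nat -> alpha (sigma t) i i = 0) ->
  (forall t, 0 <= t -> balanced N alpha (sigma t)) ->
  forall t, 0 <= t -> fsum N (fun j => output j t) = fsum N (fun j => output j 0).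
Proof.
  intros HtauD Hts0 Hdwell Hloop Hbal. destruct output_flow as [Hc Hd].
  apply (pw_constant ts tauD HtauD Hts0 Hdwell (fun t => fsum N (fun j => output j t))).
  - intros t Ht Hns.
    apply dpl_eqv with (fsum N (fun j => fsum N (fun k => alpha (sigma t) j k * (output k t - output j t)))).
    + apply (dpl_fsum N (fun j s => output j s)). intros j Hj. apply Hd; auto.
    + apply balanced_flow_sum; [intros; apply Hloop; auto; lra | apply Hbal; lra].
  - intros t Ht. apply cont_nonneg_fsum; auto.
Qed.

Lemma output_to_average i : (i < N)%nat ->
  (forall eps, eps > 0 -> exists T0, forall t, t >= T0 ->
     forall j k, (j < N)%nat -> (k < N)%nat -> Rabs (output j t - output k t) < eps) ->
  (forall t, 0 <= t -> fsum N (fun j => output j t) = fsum N (fun j => output j 0)) ->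
  converges_to (output i) (fsum N (fun j => output j 0) / INR N).
Proof.
  intros Hi Hcons Hsum eps Heps.
  assert (HN : 0 < INR N) by (apply lt_0_INR; lia).
  destruct (Hcons (eps / 2)) as [T0 HT0]; [lra|].
  exists (Rmax T0 0). intros t Ht. pose proof (Rmax_l T0 0); pose proof (Rmax_r T0 0).
  rewrite <- (Hsum t) by lra.
  replace (output i t - fsum N (fun j => output j t) / INR N)
    with (fsum N (fun j => output i t - output j t) / INR N) by (rewrite fsum_minus, fsum_const; field; lra).
  unfold Rdiv. rewrite Rabs_mult, Rabs_inv, (Rabs_right (INR N)) by lra.
  apply Rmult_lt_reg_r with (INR N); [lra|]. rewrite Rmult_assoc, Rinv_l, Rmult_1_r by lra.
  eapply Rle_lt_trans; [apply fsum_abs|].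
  eapply Rle_lt_trans; [apply (fsum_bound N _ (eps / 2)) | nra].
  intros j Hj. left. apply HT0; auto; lra.
Qed.

Definition coupling (i : nat) (t : R) : R :=
  - fsum N (fun j => alpha (sigma t) i j * (output i t - output j t)).

Lemma tail_companion i : (i < N)%nat ->
  companion ts m' (fun k => (a (S k), 0)) (fun k t => (x i t (S k), 0)) (fun t => (coupling i t, 0)).
Proof.
  intros Hi. destruct Hsol as [Hxc Hxd]. split.
  - intros k Hk t Ht. split; [exact (Hxc i (S k) Hi ltac:(lia) t Ht) | exact (cont_nonneg_const 0 t)].
  - intros t Ht Hns k Hk. assert (Hx := Hxd t Ht Hns i (S k) Hi ltac:(lia)). unfold rhs in Hx. split.
    + apply (dpl_eqv _ _ _ _ Hx). destruct (Nat.ltb_spec (S k) m').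
      * replace (Nat.ltb (S k + 1) (S m')) with true by (symmetry; apply Nat.ltb_lt; lia).
        simpl. f_equal; lia.
      * replace (Nat.ltb (S k + 1) (S m')) with false by (symmetry; apply Nat.ltb_ge; lia).
        unfold input, coupling. rewrite dot_K1. simpl fst. rewrite fst_Csum.
        rewrite (fsum_ext m' (fun l => fst (Cmul (a (S l), 0) (x i t (S l), 0))) (fun l => a (S l) * x i t (S l)))
          by (intros; simpl; ring).
        rewrite (fsum_ext N (fun j => alpha (sigma t) i j * dot (S m') (K2vec (S m') a) (fun l => x i t l - x j t l))
                            (fun j => alpha (sigma t) i j * (output i t - output j t)))
          by (intros j Hj; rewrite dot_minus; reflexivity).
        ring.
    + apply (dpl_eqv _ _ _ _ (derivable_pt_lim_const 0 t)). destruct (Nat.ltb_spec (S k) m'); [reflexivity|].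
      simpl snd. rewrite snd_Csum, (fsum_ext m' _ (fun _ => 0)), fsum_const by (intros; simpl; ring). ring.
Qed.

Variable D : R.
Hypothesis HD : D > 0.
Hypothesis Hw0 : forall t, 0 <= t -> forall i j, (i < N)%nat -> (j < N)%nat -> 0 <= alpha (sigma t) i j.
Hypothesis Hdeg : forall t, 0 <= t -> forall i, (i < N)%nat -> fsum N (fun j => alpha (sigma t) i j) <= D.
Hypothesis Hcons : forall eps, eps > 0 -> exists T0, forall t, t >= T0 ->
  forall j k, (j < N)%nat -> (k < N)%nat -> Rabs (output j t - output k t) < eps.

Lemma coupling_vanishes i : (i < N)%nat -> converges_to (coupling i) 0.
Proof.
  intros Hi eps Heps. destruct (Hcons (eps / (D + 1))) as [T0 HT0]; [apply Rdiv_lt_0_compat; lra|].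
  exists (Rmax T0 0). intros t Ht. pose proof (Rmax_l T0 0); pose proof (Rmax_r T0 0).
  unfold coupling. rewrite Rminus_0_r, Rabs_Ropp.
  eapply Rle_lt_trans; [apply fsum_abs|].
  apply Rle_lt_trans with (eps / (D + 1) * fsum N (fun j => alpha (sigma t) i j)).
  - rewrite <- fsum_scal. apply fsum_le. intros j Hj.
    rewrite Rabs_mult, (Rabs_right (alpha _ _ _)) by (apply Rle_ge, Hw0; auto; lra).
    rewrite (Rmult_comm (eps / (D + 1))).
    apply Rmult_le_compat_l; [apply Hw0; auto; lra | left; apply HT0; auto; lra].
  - assert (eps / (D + 1) * fsum N (fun j => alpha (sigma t) i j) <= eps / (D + 1) * D)
      by (apply Rmult_le_compat_l; [left; apply Rdiv_lt_0_compat; lra | apply Hdeg; auto; lra]).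
    assert (eps / (D + 1) * D < eps).
    { apply Rmult_lt_reg_r with (D + 1); [lra|].
      replace (eps / (D + 1) * D * (D + 1)) with (eps * D) by (field; lra). nra. }
    lra.
Qed.

(* The internal states x_i^2, ..., x_i^m vanish: they form a Hurwitz companion
   system whose input, the coupling term, vanishes. *)
Lemma tail_vanishes tauD i : 0 < tauD -> ts 0%nat = 0 -> (forall k, ts (S k) - ts k >= tauD) ->
  hurwitz (S m') a -> (i < N)%nat ->
  forall k, (k < m')%nat -> converges_to (fun t => x i t (S k)) 0.
Proof.
  intros HtauD Hts0 Hdwell Hhur Hi k Hk.
  assert (Hroots : forall z, monic_poly m' (fun k => (a (S k), 0)) z = Czero -> fst z < 0).
  { intros z Hz. apply Hhur. unfold char_poly. replace (S m' - 1)%nat with m' by lia.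
    rewrite (Csum_ext m' _ (fun j => Cmul (a (S j), 0) (Cpow z j))); [exact Hz|].
    intros j Hj. replace (j + 1)%nat with (S j) by lia. reflexivity. }
  assert (Hh : cvanish (fun t => (coupling i t, 0))).
  { intros eps He. destruct (coupling_vanishes i Hi eps He) as [T HT]. exists T. intros t Ht.
    simpl. rewrite Rabs_R0. split; [rewrite <- (Rminus_0_r (coupling i t)); auto | lra]. }
  intros eps He.
  destruct (companion_vanish ts tauD HtauD Hts0 Hdwell m' _ _ _ Hroots (tail_companion i Hi) Hh k Hk eps He)
    as [T HT].
  exists T. intros t Ht. rewrite Rminus_0_r. apply (HT t Ht).
Qed.
End Agents.

(* The first state is recovered from the output y_i = a_1 x_i^1 + K2' x_i' and
   the vanishing internal states x_i'. *)
Lemma head_converges m' a (X : R -> nat -> R) L : (0 < m')%nat -> a 1%nat <> 0 ->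
  converges_to (fun t => dot (S m') (K2vec (S m') a) (X t)) L ->
  (forall k, (k < m')%nat -> converges_to (fun t => X t (S k)) 0) ->
  converges_to (fun t => X t 0%nat) (/ a 1%nat * L).
Proof.
  intros Hm Ha1 Hy Htail.
  assert (Hrest : converges_to (fun t => fsum m' (fun k => K2vec (S m') a (S k) * X t (S k)))
                               (fsum m' (fun k => K2vec (S m') a (S k) * 0)))
    by (apply converges_fsum; intros k Hk; apply converges_scal, Htail; auto).
  rewrite (fsum_ext m' _ (fun _ => 0)), fsum_const, Rmult_0_r in Hrest by (intros; ring).
  assert (H := converges_scal (/ a 1%nat) _ _ (converges_plus _ _ _ _ Hy (converges_scal (-1) _ _ Hrest))).
  replace (/ a 1%nat * (L + -1 * 0)) with (/ a 1%nat * L) in H by ring.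
  eapply converges_ext; [|exact H]. intros t.
  unfold dot. rewrite fsum_shift, K2vec_lt by exact Hm. field. exact Ha1.
Qed.

Lemma switched_weight_bounds N M (alpha : nat -> nat -> nat -> R) (sigma : R -> nat) :
  valid_weights N M alpha -> (forall t, 0 <= t -> (sigma t < M)%nat) ->
  exists D amin, D > 0 /\ 0 < amin /\ amin <= D /\
    (forall t, 0 <= t -> forall i j, (i < N)%nat -> (j < N)%nat -> 0 <= alpha (sigma t) i j) /\
    (forall t, 0 <= t -> forall i, (i < N)%nat -> fsum N (fun j => alpha (sigma t) i j) <= D) /\
    (forall t, 0 <= t -> forall i j, (i < N)%nat -> (j < N)%nat ->
       0 < alpha (sigma t) i j -> amin <= alpha (sigma t) i j).
Proof.
  intros Hw HsigM.
  destruct (family_degree_bound M N alpha) as [D [HD HDb]].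
  destruct (family_min_weight M N alpha) as [c [Hc Hmin]].
  exists D, (Rmin c D). pose proof (Rmin_l c D); pose proof (Rmin_r c D).
  repeat split; [lra | apply Rmin_pos; lra | lra | | |].
  - intros t Ht i j Hi Hj. apply (Hw (sigma t) i j (HsigM t Ht) Hi Hj).
  - intros t Ht i Hi. apply HDb; auto.
  - intros t Ht i j Hi Hj Hp. specialize (Hmin (sigma t) (HsigM t Ht) i Hi j Hj Hp). lra.
Qed.

Theorem mainTheorem3
  (N m M : nat) (Hm : (2 <= m)%nat)
  (a : nat -> R) (Hhur : hurwitz m a)
  (alpha : nat -> nat -> nat -> R) (Hw : valid_weights N M alpha)
  (Hbal : forall k, (k < M)%nat -> balanced N alpha k)
  (sigma : R -> nat) (tauD : R) (HtauD : 0 < tauD)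
  (ts : nat -> R) (Hsw : switching_signal M sigma tauD ts)
  (Hconn : uniformly_jointly_quasi_strongly_connected N alpha sigma)
  (x : nat -> R -> nat -> R) (Hsol : is_solution N m a alpha sigma ts x) :
  forall i l, (i < N)%nat -> (l < m)%nat ->
    converges_to (fun t => x i t l)
      (if Nat.eqb l 0
       then / (a 1%nat * INR N) * fsum N (fun j => dot m (K2vec m a) (x j 0))
       else 0).
Proof.
  intros i l Hi Hl.
  destruct Hsw as [Hts0 [Hdwell [Hsig HsigM]]].
  destruct Hconn as [T [HT Hcon]].
  destruct m as [|m']; [lia|].
  destruct (switched_weight_bounds N M alpha sigma Hw HsigM)
    as [D [amin [HD [Hamin [HaminD [Hw0 [Hdeg Hmin]]]]]]].
  assert (Hcons := consensus ts tauD HtauD Hts0 Hdwell N alpha sigma D HD Hw0 Hdeg Hsig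
                     amin Hamin HaminD Hmin T HT Hcon _ (output_flow N m' a alpha sigma ts x Hsol)).
  assert (Hsum := output_sum_conserved N m' a alpha sigma ts x Hsol tauD HtauD Hts0 Hdwell
                    (fun t k Ht Hk => proj2 (Hw (sigma t) k k (HsigM t Ht) Hk Hk))
                    (fun t Ht => Hbal (sigma t) (HsigM t Ht))).
  assert (Htail := tail_vanishes N m' a alpha sigma ts x Hsol D HD Hw0 Hdeg Hcons tauD i
                     HtauD Hts0 Hdwell Hhur Hi).
  destruct l as [|l]; simpl.
  - replace (/ (a 1%nat * INR N) * fsum N (fun j => dot (S m') (K2vec (S m') a) (x j 0)))
      with (/ a 1%nat * (fsum N (fun j => output m' a x j 0) / INR N))
      by (unfold output; field; split; [apply not_0_INR; lia | apply (hurwitz_a1_nonzero m'); auto; lia]).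
    apply (head_converges m'); [lia | apply (hurwitz_a1_nonzero m'); auto; lia | |exact Htail].
    apply output_to_average; auto.
  - apply Htail. lia.
Qed.
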